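(* Let $k\ge1$ be the cache size and $H_k=\sum_{j=1}^k 1/j$. In both the discard-predictions setup and the phase-predictions setup, for every constant $\epsilon>0$ and all values $\beta,\gamma$, no (possibly randomized) online paging algorithm is $(2,H_k-2-\epsilon,\gamma)$-competitive, and none is $\big(2,\beta,\frac{H_k-2}{k-1}-\epsilon\big)$-competitive.
   Context: Paging: there is a universe $U$ of pages and a cache holding at most $k$ pages. Requests $r_1,\dots,r_n\in U$ arrive online. If the requested page is not in the cache (a page fault), it must be loaded, evicting a cached page if the cache holds $k$ pages. The cost is the number of page faults; $\mathrm{OPT}(I)$ is the minimum offline cost on request sequence $I$. Along with each request $r_i$ the online algorithm receives a prediction bit $p_i\in\{0,1\}$ (which may be arbitrary). An algorithm is $(\alpha,\beta,\gamma)$-competitive (with $\alpha,\beta,\gamma\ge0$) if there is a constant $b$ (possibly depending on $k$) such that for every instance $I$ and all predictions $p$, $\mathbb{E}[\mathrm{ALG}(I,p)]\le \alpha\,\mathrm{OPT}(I)+\beta\,\eta_0+\gamma\,\eta_1+b$, the expectation being over the algorithm's randomness. Discard-predictions setup: fix the optimal offline algorithm LFD (on a fault with full cache, evict a cached page never requested again if one exists, otherwise the cached page whose next request is furthest in the future; ties broken by a fixed rule). Ground truth: $p_i^*=0$ if LFD keeps $r_i$ in cache until its next request (or to the end if none), $p_i^*=1$ if LFD evicts $r_i$ before it is requested again. Errors: $\eta_h=|\{i\in[n]: p_i=h,\ p_i^*=1-h\}|$. Phase-predictions setup: partition the requests into $k$-phases (the first starts at $r_1$; each phase is a maximal contiguous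 segment with at most $k$ distinct pages; the next starts right after). For $r_i$ in phase $j$: $p_i^*=0$ if page $r_i$ is requested in phase $j+1$, else $p_i^*=1$. Errors: $\eta_h$ = number of counted requests $i$ with $p_i=h$, $p_i^*=1-h$, where counted requests are, for each non-last phase $j$ and each page requested in phase $j$, only the last request to that page within phase $j$. *)

From HB Require Import structures.
From mathcomp Require Import all_boot all_order all_algebra.
From mathcomp Require Import reals.
Set Implicit Arguments. Unset Strict Implicit. Unset Printing Implicit Defensive.
Import Order.TTheory GRing.Theory Num.Theory.
Local Open Scope ring_scope.

(* A cache is a duplicate-free
   [seq nat] of size at most k. Requests with predictions: [seq (nat * bool)],
   the bool being the prediction bit (false = 0, true = 1). *)

(* Behavioral randomization: given the full history (past requests, past
   predictions, and the cache after each past step, i.e. the past random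
   outcomes), the current cache, the current request r and prediction p,
   [A h C r p x] is the probability of evicting page x (used on a fault with
   full cache). *)
Definition alg (R : realType) :=
  seq (nat * bool * seq nat) -> seq nat -> nat -> bool -> nat -> R.

Definition valid_alg (R : realType) (k : nat) (A : alg R) : Prop :=
  forall h C r p, uniq C -> size C = k -> r \notin C ->
    (forall x, 0 <= A h C r p x) /\ \sum_(x <- C) A h C r p x = 1.

Fixpoint exp_cost (R : realType) (k : nat) (A : alg R)
    (h : seq (nat * bool * seq nat)) (C : seq nat) (s : seq (nat * bool)) : R :=
  match s with
  | [::] => 0
  | (r, p) :: s' =>
      if r \in C then exp_cost k A (rcons h (r, p, C)) C s'
      else if (size C < k)%N then
        1 + exp_cost k A (rcons h (r, p, r :: C)) (r :: C) s'
      else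
        1 + \sum_(x <- C) A h C r p x *
              exp_cost k A (rcons h (r, p, r :: rem x C)) (r :: rem x C) s'
  end.

Fixpoint opt_cost (k : nat) (C : seq nat) (rs : seq nat) : nat :=
  match rs with
  | [::] => 0
  | r :: rs' =>
      if r \in C then opt_cost k C rs'
      else if (size C < k)%N then (opt_cost k (r :: C) rs').+1
      else
        let l := [seq opt_cost k (r :: rem x C) rs' | x <- C] in
        (foldr minn (head 0%N l) l).+1
  end.

(* tb chooses among the (sorted) candidate pages never requested again. *)
Definition valid_tb (tb : seq nat -> nat) : Prop :=
  forall s : seq nat, s != [::] -> tb s \in s.

Definition lfd_victim (tb : seq nat -> nat) (C fut : seq nat) : nat :=
  let cand := [seq x <- C | x \notin fut] in
  if cand != [::] then tb (sort leq cand)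
  else foldr (fun x y => if (index y fut < index x fut)%N then x else y)
             (head 0%N C) C.

Fixpoint lfd_caches (k : nat) (tb : seq nat -> nat) (C : seq nat)
    (rs : seq nat) : seq (seq nat) :=
  match rs with
  | [::] => [::]
  | r :: rs' =>
      let C' := if r \in C then C
                else if (size C < k)%N then r :: C
                else r :: rem (lfd_victim tb C rs') C in
      C' :: lfd_caches k tb C' rs'
  end.

(* p*_i (0-indexed i) in the discard-predictions setup: true (=1) iff LFD
   evicts r_i before its next request (or before the end if none). *)
Definition pstar_discard (k : nat) (tb : seq nat -> nat) (rs : seq nat)
    (i : nat) : bool :=
  let r := nth 0%N rs i in
  let nxt := (i.+1 + index r (drop i.+1 rs))%N in
  let cs := lfd_caches k tb [::] rs in
  has (fun j => r \notin nth [::] cs j) (index_iota i.+1 nxt).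

(* eta_h for the discard setup: eta s false = eta_0, eta s true = eta_1 *)
Definition eta_discard (k : nat) (tb : seq nat -> nat)
    (s : seq (nat * bool)) (hb : bool) : nat :=
  let rs := unzip1 s in let ps := unzip2 s in
  count (fun i => (nth false ps i == hb) && (pstar_discard k tb rs i == ~~ hb))
        (iota 0 (size s)).

(* phase index of each request (greedy maximal segments with <= k distinct
   pages, the first one starting at r_1) *)
Fixpoint phase_ids (k : nat) (cur : seq nat) (j : nat) (rs : seq nat)
    : seq nat :=
  match rs with
  | [::] => [::]
  | r :: rs' =>
      if r \in cur then j :: phase_ids k cur j rs'
      else if (size cur < k)%N then j :: phase_ids k (r :: cur) j rs'
      else j.+1 :: phase_ids k [:: r] j.+1 rs'
  end.

(* request i is counted: its phase j is not the last phase, and i is the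
   last request to page r_i within phase j *)
Definition counted_phase (k : nat) (rs : seq nat) (i : nat) : bool :=
  let ph := phase_ids k [::] 0 rs in
  let j := nth 0%N ph i in let r := nth 0%N rs i in
  has (fun i' => nth 0%N ph i' == j.+1) (iota 0 (size rs)) &&
  ~~ has (fun i' => (nth 0%N ph i' == j) && (nth 0%N rs i' == r))
         (iota i.+1 (size rs - i.+1)).

(* p*_i = 0 (false) iff page r_i is requested in the next phase *)
Definition pstar_phase (k : nat) (rs : seq nat) (i : nat) : bool :=
  let ph := phase_ids k [::] 0 rs in
  let j := nth 0%N ph i in let r := nth 0%N rs i in
  ~~ has (fun i' => (nth 0%N ph i' == j.+1) && (nth 0%N rs i' == r))
         (iota 0 (size rs)).

Definition eta_phase (k : nat) (s : seq (nat * bool)) (hb : bool) : nat :=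
  let rs := unzip1 s in let ps := unzip2 s in
  count (fun i => [&& counted_phase k rs i, nth false ps i == hb
                    & pstar_phase k rs i == ~~ hb])
        (iota 0 (size s)).

Definition competitive (R : realType) (k : nat)
    (eta : seq (nat * bool) -> bool -> nat) (A : alg R) (a b c : R) : Prop :=
  [/\ 0 <= a, 0 <= b, 0 <= c &
    exists b0 : R, forall s : seq (nat * bool),
      exp_cost k A [::] [::] s <=
        a * (opt_cost k [::] (unzip1 s))%:R + b * (eta s false)%:R
          + c * (eta s true)%:R + b0].

Definition harmonic (R : realType) (k : nat) : R :=
  \sum_(1 <= j < k.+1) (j%:R)^-1.

From HB Require Import structures.
From mathcomp Require Import all_boot all_order all_algebra.
From mathcomp Require Import reals.
From mathcomp Require Import zify ring lra.
Set Implicit Arguments. Unset Strict Implicit. Unset Printing Implicit Defensive.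
Import Order.TTheory GRing.Theory Num.Theory.
Local Open Scope ring_scope.

(* The adversary works on the k + 1 pages 0..k.  After requesting 0..k-1 it
   builds phases adaptively against the algorithm's eviction probabilities:
   a phase starts with the page x missing from the offline cache; then, while
   u pages of the phase are unrequested, it re-requests the pages already
   requested and requests the unrequested page most likely to be missing from
   the online cache.  The re-requests pay for every requested page that is
   missing and exactly one page is missing, so each round costs at least 1/u
   in expectation and the phase at least H_k.  The phase ends with a sweep
   over its k pages, all predicted 0 or all predicted 1.
   Offline, evicting the one page the phase does not request costs 1 per
   phase; LFD makes exactly these evictions and the phases are k-phases, so
   all-0 sweeps are wrong on one request per phase and all-1 sweeps on k - 1
   (plus k at the end).  Over n phases the competitive bound is therefore
   (2 + beta) n + O(1), resp. (2 + gamma (k - 1)) n + O(1), while the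
   algorithm pays n H_k - O(1). *)

(** * Expected costs *)

Definition history := seq (nat * bool * seq nat).

Section Expectation.
Variables (R : realType) (k : nat) (A : alg R).

Fixpoint expect_after (h : history) (C : seq nat) (s : seq (nat * bool))
    (f : history -> seq nat -> R) : R :=
  match s with
  | [::] => f h C
  | (r, p) :: s' =>
      if r \in C then expect_after (rcons h (r, p, C)) C s' f
      else if (size C < k)%N then expect_after (rcons h (r, p, r :: C)) (r :: C) s' f
      else \sum_(x <- C) A h C r p x *
             expect_after (rcons h (r, p, r :: rem x C)) (r :: rem x C) s' f
  end.

Lemma exp_cost_cat s u h C :
  exp_cost k A h C (s ++ u) =
  exp_cost k A h C s + expect_after h C s (fun h' C' => exp_cost k A h' C' u).
Proof.
elim: s h C => [|[r p] s IH] h C /=; first by rewrite add0r.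
case: ifP => _; first exact: IH.
case: ifP => _; first by rewrite IH addrA.
rewrite -addrA; congr (1 + _); rewrite -big_split /=.
by apply: eq_bigr => x _; rewrite IH mulrDr.
Qed.

Lemma expect_after_cat s u h C f :
  expect_after h C (s ++ u) f =
  expect_after h C s (fun h' C' => expect_after h' C' u f).
Proof.
elim: s h C => [|[r p] s IH] h C //=.
case: ifP => _; first exact: IH.
case: ifP => _; first exact: IH.
by apply: eq_bigr => x _; rewrite IH.
Qed.

Lemma eq_expect_after s h C (f g : history -> seq nat -> R) :
  f =2 g -> expect_after h C s f = expect_after h C s g.
Proof.
move=> fg; elim: s h C => [|[r p] s IH] h C //=.
case: ifP => _; first exact: IH.
case: ifP => _; first exact: IH.
by apply: eq_bigr => x _; rewrite IH.
Qed.

Lemma expect_after_sum (I : Type) (L : seq I) s h C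
    (F : I -> history -> seq nat -> R) :
  expect_after h C s (fun h' C' => \sum_(y <- L) F y h' C') =
  \sum_(y <- L) expect_after h C s (F y).
Proof.
elim: s h C => [|[r p] s IH] h C //=.
case: ifP => _; first exact: IH.
case: ifP => _; first exact: IH.
under eq_bigr do rewrite IH mulr_sumr.
exact: exchange_big.
Qed.

Lemma exp_cost_single h C y p :
  exp_cost k A h C [:: (y, p)] = (y \notin C)%:R.
Proof.
rewrite /=; case: ifP => _ //; case: ifP => _; first by rewrite addr0.
by rewrite big1 ?addr0 // => x _; rewrite mulr0.
Qed.

(* The adversary requests only the pages [0..k]; after its first [k]
   requests the cache holds all of them but one. *)
Definition valid_cache (C : seq nat) : bool :=
  [&& uniq C, size C == k & all (fun y => y < k.+1)%N C].

Definition valid_requests (s : seq (nat * bool)) : bool :=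
  all (fun q => q.1 < k.+1)%N s.

Lemma valid_requests_cat s1 s2 :
  valid_requests (s1 ++ s2) = valid_requests s1 && valid_requests s2.
Proof. exact: all_cat. Qed.

Lemma valid_requests_map (l : seq nat) b :
  all (fun y => y < k.+1)%N l -> valid_requests [seq (y, b) | y <- l].
Proof. by rewrite /valid_requests all_map. Qed.

Lemma valid_cache_full C : valid_cache C -> (size C < k)%N = false.
Proof. by case/and3P => _ /eqP -> _; rewrite ltnn. Qed.

Lemma valid_cache_evict C r x : valid_cache C -> (r < k.+1)%N -> r \notin C ->
  x \in C -> valid_cache (r :: rem x C).
Proof.
case/and3P => uC /eqP sC aC rk rC xC; apply/and3P; split.
- by rewrite /= rem_uniq // andbT; apply: contra rC; exact: mem_rem.
- have : (0 < size C)%N by case: (C) xC.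
  by rewrite /= size_rem // sC => k0; rewrite prednK.
- by rewrite /= rk /=; apply/allP => y /mem_rem yC; exact: (allP aC).
Qed.

Hypothesis vA : valid_alg k A.

Lemma evict_distr h C r p : valid_cache C -> r \notin C ->
  (forall x, 0 <= A h C r p x) /\ \sum_(x <- C) A h C r p x = 1.
Proof. by case/and3P => uC /eqP sC _; apply: vA. Qed.

Lemma ler_expect_after s h C (f g : history -> seq nat -> R) :
  valid_cache C -> valid_requests s ->
  (forall h' C', valid_cache C' -> f h' C' <= g h' C') ->
  expect_after h C s f <= expect_after h C s g.
Proof.
move=> + + fg; elim: s h C => [|[r p] s IH] h C IC /=; first by move=> _; exact: fg.
case/andP => /= rk rs; case: ifPn => rC; first exact: IH.
rewrite valid_cache_full //; have [A0 _] := evict_distr h p IC rC.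
rewrite big_seq [leRHS]big_seq; apply: ler_sum => x xC.
by apply: ler_wpM2l => //; apply: IH => //; exact: valid_cache_evict.
Qed.

Lemma eq_in_expect_after s h C (f g : history -> seq nat -> R) :
  valid_cache C -> valid_requests s ->
  (forall h' C', valid_cache C' -> f h' C' = g h' C') ->
  expect_after h C s f = expect_after h C s g.
Proof.
move=> IC rs fg; apply/le_anti/andP.
by split; apply: ler_expect_after => // h' C' /fg ->.
Qed.

Lemma expect_after_cst s h C (c : R) :
  valid_cache C -> valid_requests s -> expect_after h C s (fun _ _ => c) = c.
Proof.
elim: s h C => [|[r p] s IH] h C IC //=.
case/andP => /= rk rs; case: ifPn => rC; first exact: IH.
rewrite valid_cache_full //; have [_ A1] := evict_distr h p IC rC.
rewrite (eq_big_seq (fun x => A h C r p x * c)); last first.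
  by move=> x xC; rewrite IH //; exact: valid_cache_evict.
by rewrite -mulr_suml A1 mul1r.
Qed.

End Expectation.

Lemma sumr_count (R : realType) (T : Type) (P : pred T) (s : seq T) :
  \sum_(x <- s) ((P x)%:R : R) = (count P s)%:R.
Proof. by elim: s => [|x s IH]; rewrite ?big_nil // big_cons IH natrD. Qed.

Lemma count_notin_evict (S C : seq nat) r x : uniq (rcons S r) -> uniq C ->
  (count (fun m => m \notin r :: rem x C) (rcons S r) <=
   count (fun m => m \notin C) S + 1)%N.
Proof.
move=> uS uC; rewrite -cats1 count_cat /= inE eqxx /= !addn0.
apply: (@leq_trans (count (predU (fun m => m \notin C) (pred1 x)) S)).
  apply: sub_count => m; rewrite /= inE negb_or => /andP[_].
  by rewrite (mem_rem_uniq _ uC) !inE; case: (m == x); case: (m \in C).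
rewrite -(leq_add2r (count (predI (fun m => m \notin C) (pred1 x)) S)).
rewrite count_predUI -addnA leq_add2l.
apply: (@leq_trans 1); last exact: leq_addr.
have uS' : uniq S by move: uS; rewrite -cats1 cat_uniq => /andP[].
by rewrite count_uniq_mem // leq_b1.
Qed.

Section MissProbability.
Variables (R : realType) (k : nat) (A : alg R).
Hypothesis vA : valid_alg k A.

Definition miss_prob (h : history) (C : seq nat) (t : seq (nat * bool)) (y : nat) : R :=
  expect_after k A h C t (fun _ C' => (y \notin C')%:R).

Lemma exp_cost_rcons h C t y p :
  exp_cost k A h C (rcons t (y, p)) = exp_cost k A h C t + miss_prob h C t y.
Proof.
rewrite -cats1 exp_cost_cat; congr (_ + _); apply: eq_expect_after => h' C'.
exact: exp_cost_single.
Qed.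

Lemma count_notin_valid_cache C : valid_cache k C ->
  count (fun y => y \notin C) (iota 0 k.+1) = 1%N.
Proof.
case/and3P => uC /eqP sC aC.
have := count_predC (fun y => y \in C) (iota 0 k.+1).
have -> : count (fun y => y \in C) (iota 0 k.+1) = k.
  rewrite -[RHS]sC -size_filter; apply: perm_size; apply: uniq_perm => //.
    by rewrite filter_uniq // iota_uniq.
  move=> y; rewrite mem_filter; apply/andP/idP => [[]//|yC]; split => //.
  by rewrite mem_iota add0n; exact: (allP aC).
by rewrite size_iota => /eqP; rewrite -{2}(addn1 k) eqn_add2l => /eqP <-.
Qed.

Lemma sum_miss_prob h C t : valid_cache k C -> valid_requests k t ->
  \sum_(y <- iota 0 k.+1) miss_prob h C t y = 1.
Proof.
move=> IC rt; rewrite /miss_prob -expect_after_sum.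
rewrite -[RHS](expect_after_cst vA h 1 IC rt).
apply: eq_in_expect_after => // h' C' IC' /=.
by rewrite sumr_count count_notin_valid_cache.
Qed.

Lemma miss_prob_ge0 h C t y : valid_cache k C -> valid_requests k t ->
  0 <= miss_prob h C t y.
Proof.
move=> IC rt; rewrite -(expect_after_cst vA h 0 IC rt).
by apply: ler_expect_after => // ? ? _; rewrite ler0n.
Qed.

Lemma miss_prob_le1 h C t y : valid_cache k C -> valid_requests k t ->
  miss_prob h C t y <= 1.
Proof.
move=> IC rt; rewrite -[leRHS](expect_after_cst vA h 1 IC rt).
by apply: ler_expect_after => // ? ? _; rewrite lern1 leq_b1.
Qed.

(* A page of [S ++ L] missing at the end was missing before [L] started, or
   was evicted by a fault of [L] after its own request. *)
Lemma sweep_bound (L : seq (nat * bool)) (S : seq nat) h C :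
  valid_cache k C -> valid_requests k L -> uniq (S ++ map fst L) ->
  expect_after k A h C L (fun _ C' => \sum_(m <- S ++ map fst L) ((m \notin C')%:R)) <=
  \sum_(m <- S) ((m \notin C)%:R) + exp_cost k A h C L.
Proof.
elim: L S h C => [|[r p] L IH] S h C IC.
  by move=> _ _ /=; rewrite cats0 addr0.
case/andP => /= rk rL uSL; rewrite -cat_rcons in uSL *.
case: ifPn => rC.
  apply: (le_trans (IH _ _ _ IC rL uSL)).
  by rewrite -cats1 big_cat big_seq1 /= rC addr0.
rewrite valid_cache_full //; have [A0 A1] := evict_distr vA h p IC rC.
have uS : uniq (rcons S r) by move: uSL; rewrite cat_uniq => /andP[].
have uC : uniq C by case/and3P: IC.
apply: (@le_trans _ _ (\sum_(x <- C) (A h C r p x *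
   (\sum_(m <- S) ((m \notin C)%:R) + 1) + A h C r p x *
     exp_cost k A (rcons h (r, p, r :: rem x C)) (r :: rem x C) L))).
  rewrite big_seq [leRHS]big_seq; apply: ler_sum => x xC.
  rewrite -mulrDr; apply: ler_wpM2l => //.
  apply: (le_trans (IH _ _ _ (valid_cache_evict IC rk rC xC) rL uSL)).
  rewrite lerD2r !sumr_count (_ : 1 = 1%:R) // -natrD ler_nat.
  exact: count_notin_evict.
by rewrite big_split /= -mulr_suml A1 mul1r addrA.
Qed.

Lemma miss_prob_sweep_le h C t (L : seq (nat * bool)) :
  valid_cache k C -> valid_requests k t -> valid_requests k L -> uniq (map fst L) ->
  \sum_(m <- map fst L) miss_prob h C (t ++ L) m <=
  exp_cost k A h C (t ++ L) - exp_cost k A h C t.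
Proof.
move=> IC rt rL uL; rewrite /miss_prob -expect_after_sum expect_after_cat.
rewrite exp_cost_cat [leRHS]addrC addKr.
apply: ler_expect_after => // h' C' IC'.
by have := sweep_bound h' IC' rL (S := [::]) uL; rewrite /= big_nil add0r.
Qed.

End MissProbability.

(** * The adversary *)

(* One phase of the adversary's sequence: the pages [probes] requested with
   prediction 0, then a sweep over all pages of the phase, all predicted by
   one common bit; [idle] is the page of [0..k] that the phase does not request. *)
Record block := Block { probes : seq nat; sweep : seq nat; idle : nat }.

Definition block_pages (B : block) : seq nat := probes B ++ sweep B.

Definition block_preds (b : bool) (B : block) : seq bool :=
  nseq (size (probes B)) false ++ nseq (size (sweep B)) b.

Definition block_requests (b : bool) (B : block) : seq (nat * bool) :=
  [seq (y, false) | y <- probes B] ++ [seq (y, b) | y <- sweep B].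

Definition fill_block (k : nat) : block := Block [::] (iota 0 k) k.

Definition adv_requests (k : nat) (b : bool) (Bs : seq block) : seq (nat * bool) :=
  flatten (map (block_requests b) (fill_block k :: Bs)).

Definition pages_but (k : nat) (C : seq nat) (x : nat) : Prop :=
  [/\ uniq C, size C = k & forall y, (y \in C) = (y < k.+1)%N && (y != x)].

(* [good_block k x B]: [B] may follow a phase whose idle page is [x]. *)
Definition good_block (k x : nat) (B : block) : bool :=
  [&& probes B != [::], head 0%N (probes B) == x, all (mem (sweep B)) (probes B),
      perm_eq (sweep B) (rem (idle B) (iota 0 k.+1)) & (idle B < k.+1)%N].

Fixpoint good_blocks (k x : nat) (Bs : seq block) : bool :=
  if Bs is B :: Bs' then good_block k x B && good_blocks k (idle B) Bs' else true.

Lemma pages_but_perm k C x : perm_eq C (rem x (iota 0 k.+1)) -> (x < k.+1)%N ->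
  pages_but k C x.
Proof.
move=> P xk; split.
- by rewrite (perm_uniq P) rem_uniq // iota_uniq.
- by rewrite (perm_size P) size_rem ?size_iota // mem_iota.
- move=> y; rewrite (perm_mem P) (mem_rem_uniq _ (iota_uniq _ _)) inE mem_iota /=.
  by rewrite andbC.
Qed.

Lemma good_blockP k x B : good_block k x B ->
  [/\ probes B = x :: behead (probes B), {subset probes B <= sweep B},
      pages_but k (sweep B) (idle B), x \in sweep B & (idle B != x) && (x < k.+1)%N].
Proof.
case: B => body sw y /and5P[/= bn /eqP hb /allP sub P yk].
have [us ss ms] := pages_but_perm P yk.
have bE : body = x :: behead body by case: body bn hb sub => //= a l _ ->.
have xsw : x \in sw by apply: sub; rewrite bE mem_head.
move: (xsw); rewrite ms => /andP[xk xy].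
by split => //; rewrite ?xk ?xy // eq_sym xy.
Qed.

Lemma good_block_idle k x B : good_block k x B -> (idle B < k.+1)%N.
Proof. by case/and5P. Qed.

Lemma valid_block_requests k x b B : good_block k x B ->
  valid_requests k (block_requests b B).
Proof.
move=> gB; have [_ sub [_ _ ms] _ _] := good_blockP gB.
have aw : all (fun y => y < k.+1)%N (sweep B).
  by apply/allP => y; rewrite ms => /andP[].
rewrite valid_requests_cat !valid_requests_map //.
by apply/allP => y /sub yw; exact: (allP aw).
Qed.

Lemma valid_blocks_requests k b Bs x : good_blocks k x Bs ->
  valid_requests k (flatten (map (block_requests b) Bs)).
Proof.
elim: Bs x => //= B Bs IH x /andP[gB gBs].
by rewrite valid_requests_cat (valid_block_requests b gB) (IH _ gBs).
Qed.

Lemma harmonicS (R : realType) m : harmonic R m.+1 = harmonic R m + (m.+1%:R)^-1.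
Proof. by rewrite /harmonic big_nat_recr. Qed.

Lemma harmonic1 (R : realType) : harmonic R 1 = 1.
Proof. by rewrite /harmonic big_nat1 invr1. Qed.

Definition argmax (R : realType) (f : nat -> R) (l : seq nat) : nat :=
  foldr (fun y z => if f z < f y then y else z) (head 0%N l) l.

Lemma argmaxP (R : realType) (f : nat -> R) l : l != [::] ->
  argmax f l \in l /\ forall y, y \in l -> f y <= f (argmax f l).
Proof.
have gen d : let m := foldr (fun y z => if f z < f y then y else z) d l in
    m \in d :: l /\ forall y, y \in d :: l -> f y <= f m.
  elim: l => [|a l [IHm IHi]] /=; first by split=> [|y /[1!inE] /eqP->]; rewrite ?inE.
  case: ifPn => lt; split => [|y]; rewrite ?inE ?eqxx ?orbT //.
  - move=> /or3P[/eqP->|/eqP->|yl] //; first exact: le_trans (IHi d (mem_head _ _)) (ltW lt).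
    by apply: le_trans (IHi y _) (ltW lt); rewrite inE yl orbT.
  - by move: IHm; rewrite !inE => /orP[->|->]; rewrite ?orbT.
  - move=> /or3P[/eqP->|/eqP->|yl]; [exact: IHi (mem_head _ _)|by rewrite leNgt|].
    by apply: IHi; rewrite inE yl orbT.
case: l gen => // a l gen _; have [m i] := gen a.
split; last by move=> y yl; apply: i; rewrite inE yl orbT.
by move: m; rewrite /argmax /= inE => /orP[/eqP->|]; rewrite ?mem_head.
Qed.

Lemma perm_cat_move (M U V : seq nat) y : y \in U -> perm_eq (M ++ U) V ->
  perm_eq ((y :: M) ++ rem y U) V.
Proof.
move=> yU P; rewrite /= -cat1s (perm_catCA [:: y] M (rem y U)) /=.
by apply: perm_trans P; rewrite perm_cat2l perm_sym; exact: perm_to_rem.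
Qed.

Section Adversary.
Variables (R : realType) (k : nat) (A : alg R).
Hypothesis vA : valid_alg k A.
Variables (h0 : history) (C0 : seq nat).
Hypothesis IC0 : valid_cache k C0.

Local Notation cost := (exp_cost k A h0 C0).
Local Notation miss := (miss_prob k A h0 C0).

(* Each round re-requests the pages [M] already requested in the phase, then
   requests the page of [U] most likely to be missing from the cache. *)
Fixpoint greedy_probes (n : nat) (t : seq (nat * bool)) (M U : seq nat)
    : seq nat * seq nat * seq nat :=
  if n is n'.+1 then
    let t1 := t ++ [seq (m, false) | m <- M] in
    let y := argmax (miss t1) U in
    let res := greedy_probes n' (rcons t1 (y, false)) (y :: M) (rem y U) in
    (M ++ y :: res.1.1, res.1.2, res.2)
  else ([::], M, U).

Lemma greedy_probes_pages n t (M U : seq nat) :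
  perm_eq (M ++ U) (iota 0 k.+1) -> (n < size U)%N ->
  let res := greedy_probes n t M U in
  [/\ perm_eq (res.1.2 ++ res.2) (iota 0 k.+1), size res.2 = (size U - n)%N,
      {subset res.1.1 <= res.1.2} & {subset M <= res.1.2}].
Proof.
elim: n t M U => [|n IH] t M U P sz /=; first by split => //; rewrite subn0.
set y := argmax _ U.
have U0 : U != [::] by case: (U) sz.
have [yU _] := argmaxP (miss (t ++ [seq (m, false) | m <- M])) U0.
have sz' : (n < size (rem y U))%N by rewrite size_rem //; move: sz; case: (size U).
have [P' s' sub1 sub2] := IH (rcons (t ++ [seq (m, false) | m <- M]) (y, false))
  (y :: M) (rem y U) (perm_cat_move yU P) sz'.
split => //.
- by rewrite s' size_rem // subnS predn_sub.
- move=> z; rewrite mem_cat => /orP[zM|]; first by apply: sub2; rewrite inE zM orbT.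
  by rewrite inE => /orP[/eqP->|/sub1//]; apply: sub2; exact: mem_head.
- by move=> z zM; apply: sub2; rewrite inE zM orbT.
Qed.

(* Exactly one page of [0..k] is missing from the cache, and the pages of [L]
   that are missing were evicted while serving [L]. *)
Lemma sweep_miss_ge1 t (L : seq (nat * bool)) (U : seq nat) :
  valid_requests k t -> valid_requests k L -> perm_eq (map fst L ++ U) (iota 0 k.+1) ->
  cost t + 1 <= cost (t ++ L) + \sum_(y <- U) miss (t ++ L) y.
Proof.
move=> rt rL P.
have uL : uniq (map fst L) by have := perm_uniq P; rewrite iota_uniq cat_uniq => /andP[].
have rtL : valid_requests k (t ++ L) by rewrite valid_requests_cat rt rL.
have := sum_miss_prob vA h0 IC0 rtL; rewrite -(perm_big _ P) big_cat /=.
have := miss_prob_sweep_le vA h0 IC0 rt rL uL; lra.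
Qed.

Lemma greedy_probe_cost t (M U : seq nat) :
  valid_requests k t -> perm_eq (M ++ U) (iota 0 k.+1) -> U != [::] ->
  cost t + ((size U)%:R)^-1 <=
  cost (rcons (t ++ [seq (m, false) | m <- M])
              (argmax (miss (t ++ [seq (m, false) | m <- M])) U, false)).
Proof.
move=> rt P U0; set t1 := t ++ _; set y := argmax _ U.
have [yU ymax] := argmaxP (miss t1) U0.
have fstM : map fst [seq (m, false) | m <- M] = M by rewrite -map_comp map_id.
have rM : valid_requests k [seq (m, false) | m <- M].
  apply: valid_requests_map; apply/allP => z zM.
  by have := perm_mem P z; rewrite mem_cat zM mem_iota.
have uM : uniq M by have := perm_uniq P; rewrite iota_uniq cat_uniq => /andP[].
have c0 : cost t <= cost t1.
  rewrite -subr_ge0; apply: le_trans (miss_prob_sweep_le vA h0 IC0 rt rM _).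
    by apply: sumr_ge0 => m _; apply: miss_prob_ge0 => //; rewrite valid_requests_cat rt rM.
  by rewrite fstM.
have Hsw := sweep_miss_ge1 rt rM (U := U); rewrite fstM in Hsw; have {}Hsw := Hsw P.
have hmax : \sum_(z <- U) miss t1 z <= (size U)%:R * miss t1 y.
  apply: (@le_trans _ _ (\sum_(z <- U) miss t1 y)).
    by rewrite big_seq [leRHS]big_seq; apply: ler_sum => z /ymax.
  by rewrite big_const_seq count_predT iter_addr_0 mulr_natl.
have u1 : 1 <= ((size U)%:R : R) by rewrite ler1n lt0n size_eq0.
rewrite exp_cost_rcons -/t1 -/y.
have key : 1 <= (size U)%:R * (cost t1 - cost t + miss t1 y) by nra.
suff : (size U)%:R^-1 <= cost t1 - cost t + miss t1 y by lra.
by rewrite -[_^-1]mulr1 ler_pdivrMl //; apply: lt_le_trans u1.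
Qed.

Lemma greedy_probes_cost n t (M U : seq nat) :
  valid_requests k t -> perm_eq (M ++ U) (iota 0 k.+1) -> (n < size U)%N ->
  cost t + (harmonic R (size U) - harmonic R (size U - n)) <=
  cost (t ++ [seq (y, false) | y <- (greedy_probes n t M U).1.1]).
Proof.
elim: n t M U => [|n IH] t M U rt P sz /=; first by rewrite subn0 subrr addr0 cats0.
set y := argmax _ U.
have U0 : U != [::] by case: (U) sz.
have [yU _] := argmaxP (miss (t ++ [seq (m, false) | m <- M])) U0.
have aMU : all (fun z => z < k.+1)%N (M ++ U).
  by apply/allP => z; rewrite (perm_mem P) mem_iota.
have yk : (y < k.+1)%N by apply: (allP aMU); rewrite mem_cat yU orbT.
have rM : valid_requests k [seq (m, false) | m <- M].
  by apply: valid_requests_map; move: aMU; rewrite all_cat => /andP[].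
have rt1 : valid_requests k (rcons (t ++ [seq (m, false) | m <- M]) (y, false)).
  by rewrite -cats1 !valid_requests_cat rt rM /valid_requests /= yk.
have sz' : (n < size (rem y U))%N by rewrite size_rem //; move: sz; case: (size U).
have HI := IH _ _ _ rt1 (perm_cat_move yU P) sz'.
have Hk := greedy_probe_cost rt P U0; rewrite -/y in Hk.
rewrite map_cat /= catA -cat_rcons.
rewrite size_rem // in HI.
have -> : (size U - n.+1 = (size U).-1 - n)%N by rewrite subnS predn_sub.
have -> : harmonic R (size U) = harmonic R (size U).-1 + ((size U)%:R)^-1.
  by rewrite -[in LHS](prednK (_ : 0 < size U)%N) ?lt0n ?size_eq0 // harmonicS prednK ?lt0n ?size_eq0.
lra.
Qed.

Definition adv_block (t : seq (nat * bool)) (x : nat) : block :=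
  let res := greedy_probes k.-1 (rcons t (x, false)) [:: x] (rem x (iota 0 k.+1)) in
  Block (x :: res.1.1) res.1.2 (head 0%N res.2).

Lemma adv_block_good t x : (0 < k)%N -> (x < k.+1)%N -> good_block k x (adv_block t x).
Proof.
move=> k0 xk; rewrite /adv_block; set res := greedy_probes _ _ _ _.
have xU : x \in iota 0 k.+1 by rewrite mem_iota.
have P0 : perm_eq ([:: x] ++ rem x (iota 0 k.+1)) (iota 0 k.+1).
  by rewrite perm_sym; exact: perm_to_rem.
have sz : (k.-1 < size (rem x (iota 0 k.+1)))%N by rewrite size_rem // size_iota; lia.
have [P s sub1 sub2] := greedy_probes_pages (rcons t (x, false)) P0 sz.
rewrite -/res in P s sub1 sub2.
have s1 : size res.2 = 1%N by rewrite s size_rem // size_iota; lia.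
have e2 : res.2 = [:: head 0%N res.2] by case: (res.2) s1 => // a [].
rewrite e2 in P; set x' := head 0%N res.2 in P *.
have x'U : x' \in iota 0 k.+1 by rewrite -(perm_mem P) mem_cat mem_head orbT.
apply/and5P; split; rewrite //= ?eqxx //.
- by rewrite sub2 ?mem_head //=; apply/allP => z /sub1.
- rewrite -(perm_cat2r [:: x']); apply: perm_trans P _.
  by rewrite perm_sym cats1 perm_rcons perm_sym; exact: perm_to_rem.
- by move: x'U; rewrite mem_iota.
Qed.

Lemma good_block_perm x B : good_block k x B ->
  perm_eq (sweep B ++ [:: idle B]) (iota 0 k.+1).
Proof.
case/and5P => _ _ _ P yk; rewrite cats1 perm_rcons.
apply: (@perm_trans _ (idle B :: rem (idle B) (iota 0 k.+1))); first by rewrite perm_cons.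
by rewrite perm_sym perm_to_rem // mem_iota.
Qed.

Lemma adv_block_cost t x b : (0 < k)%N -> (x < k.+1)%N -> valid_requests k t ->
  cost t + miss t x + harmonic R k <=
  cost (t ++ block_requests b (adv_block t x)) +
  miss (t ++ block_requests b (adv_block t x)) (idle (adv_block t x)).
Proof.
move=> k0 xk rt; have gB := adv_block_good t k0 xk.
have := valid_block_requests b gB; have := good_block_perm gB.
rewrite /block_requests valid_requests_cat /adv_block; set res := greedy_probes _ _ _ _.
cbn [probes sweep idle map] => Psw /andP[/andP[_ rP] rS].
have xU : x \in iota 0 k.+1 by rewrite mem_iota.
have P0 : perm_eq ([:: x] ++ rem x (iota 0 k.+1)) (iota 0 k.+1).
  by rewrite perm_sym; exact: perm_to_rem.
have sz : (k.-1 < size (rem x (iota 0 k.+1)))%N by rewrite size_rem // size_iota; lia.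
have rtx : valid_requests k (rcons t (x, false)).
  by rewrite -cats1 valid_requests_cat rt /valid_requests /= xk.
have := greedy_probes_cost rtx P0 sz; rewrite -/res size_rem // size_iota.
rewrite (_ : (k - k.-1 = 1)%N) ?harmonic1 ?exp_cost_rcons; last by lia.
have rt1 : valid_requests k (rcons t (x, false) ++ [seq (y, false) | y <- res.1.1]).
  by rewrite valid_requests_cat rtx.
have := sweep_miss_ge1 rt1 rS (U := [:: head 0%N res.2]).
rewrite -map_comp map_id big_seq1 => /(_ Psw).
rewrite -cats1 -!catA /=; lra.
Qed.

Fixpoint adv_blocks (b : bool) (n : nat) (t : seq (nat * bool)) (x : nat) : seq block :=
  if n is n'.+1 then
    let B := adv_block t x in B :: adv_blocks b n' (t ++ block_requests b B) (idle B)
  else [::].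

Lemma adv_blocks_spec b n t x : (0 < k)%N -> valid_requests k t -> (x < k.+1)%N ->
  [/\ good_blocks k x (adv_blocks b n t x), size (adv_blocks b n t x) = n &
  exists y, cost t + miss t x + n%:R * harmonic R k <=
    cost (t ++ flatten (map (block_requests b) (adv_blocks b n t x))) +
    miss (t ++ flatten (map (block_requests b) (adv_blocks b n t x))) y].
Proof.
move=> k0; elim: n t x => [|n IH] t x rt xk.
  by split => //; exists x; rewrite mul0r addr0 cats0.
set B := adv_block t x.
have -> : adv_blocks b n.+1 t x =
  B :: adv_blocks b n (t ++ block_requests b B) (idle B) by [].
have gB : good_block k x B := adv_block_good t k0 xk.
have rB : valid_requests k (t ++ block_requests b B).
  by rewrite valid_requests_cat rt (valid_block_requests b gB).
have [gBs sz [y H]] := IH _ _ rB (good_block_idle gB).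
split; [by rewrite /= gB | by rewrite /= sz | exists y].
have := adv_block_cost b k0 xk rt; rewrite -/B.
set Bs := adv_blocks _ _ _ _ in H *.
have -> : flatten (map (block_requests b) (B :: Bs)) =
  block_requests b B ++ flatten (map (block_requests b) Bs) by [].
rewrite catA -nat1r mulrDl mul1r; lra.
Qed.

End Adversary.


Fixpoint fill_history (h : history) (C : seq nat) (b : bool) (l : seq nat) : history :=
  if l is r :: l' then fill_history (rcons h (r, b, r :: C)) (r :: C) b l' else h.

Lemma exp_cost_fill (R : realType) k (A : alg R) h C b (l : seq nat) t :
  uniq (l ++ C) -> (size C + size l <= k)%N ->
  exp_cost k A h C ([seq (y, b) | y <- l] ++ t) =
  (size l)%:R + exp_cost k A (fill_history h C b l) (rev l ++ C) t.
Proof.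
elim: l h C => [|r l IH] h C /=; first by rewrite add0r.
rewrite mem_cat negb_or => /andP[/andP[rl rC] ulC] sk.
rewrite (negbTE rC) (_ : size C < k)%N /=; last by lia.
rewrite IH ?rev_cons ?cat_rcons -?nat1r ?addrA //; last by rewrite /= addSn -addnS.
by rewrite -cat1s uniq_catCA /= mem_cat negb_or rl rC ulC.
Qed.

Lemma valid_cache_iota k : valid_cache k (rev (iota 0 k)).
Proof.
apply/and3P; split; first by rewrite rev_uniq iota_uniq.
  by rewrite size_rev size_iota.
by apply/allP => y; rewrite mem_rev mem_iota /= add0n => /ltnW.
Qed.

Lemma exp_cost_adversary (R : realType) k (A : alg R) b n :
  valid_alg k A -> (0 < k)%N ->
  exists Bs, [/\ good_blocks k k Bs, size Bs = n &
    n%:R * harmonic R k - 1 <= exp_cost k A [::] [::] (adv_requests k b Bs)].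
Proof.
move=> vA k0; set h0 := fill_history [::] [::] b (iota 0 k).
have IC0 := valid_cache_iota k.
have [gBs sz [y H]] := @adv_blocks_spec R k A vA h0 _ IC0 b n [::] k k0 isT (ltnSn k).
rewrite !cat0s in H.
set Bs := adv_blocks _ _ _ _ _ _ _ _ in gBs sz H; exists Bs; split => //.
have -> : adv_requests k b Bs =
  [seq (y, b) | y <- iota 0 k] ++ flatten (map (block_requests b) Bs) by [].
rewrite exp_cost_fill ?cats0 ?iota_uniq ?size_iota // -/h0.
rewrite (_ : exp_cost k A h0 _ [::] = 0) // add0r in H.
have rt := valid_blocks_requests b gBs.
have := @miss_prob_ge0 R k A vA h0 _ [::] k IC0 isT.
have := @miss_prob_le1 R k A vA h0 _ _ y IC0 rt.
have := ler0n R k; lra.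
Qed.

Local Close Scope ring_scope.
Local Open Scope nat_scope.

(* [lia] sees [size] at [seq nat] and at [seq (Equality.sort nat)] as
   different atoms; [norm_size] identifies them. *)
Ltac norm_size := repeat match goal with
 | |- context [@size ?T ?s] => lazymatch T with nat => fail | _ => change (@size T s) with (@size nat s) end
 | H : context [@size ?T ?s] |- _ => lazymatch T with nat => fail | _ => change (@size T s) with (@size nat s) in H end
 end.
Ltac slia := norm_size; lia.

Lemma index_iota_cat m n p : (m <= n <= p) ->
  index_iota m p = index_iota m n ++ index_iota n p.
Proof.
case/andP => mn np; rewrite /index_iota.
have -> : (p - m = (n - m) + (p - n)) by slia.
rewrite iotaD; congr (_ ++ iota _ _); slia.
Qed.

Lemma iota_shift a b : iota a b = map (addn a) (iota 0 b).
Proof. by rewrite -iotaDl addn0. Qed.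

Lemma count_iotaD (P : pred nat) a b :
  count P (iota 0 (a + b)) = (count P (iota 0 a) + count (fun i => P (a + i)) (iota 0 b)).
Proof. by rewrite iotaD count_cat add0n (iota_shift a b) count_map. Qed.

Lemma has_iotaD (P : pred nat) a b :
  has P (iota 0 (a + b)) = has P (iota 0 a) || has (fun i => P (a + i)) (iota 0 b).
Proof. by rewrite iotaD has_cat add0n (iota_shift a b) has_map. Qed.

Lemma has_iota_false (P : pred nat) a :
  (forall i, i < a -> P i = false) -> has P (iota 0 a) = false.
Proof. by move=> H; apply/hasPn => i; rewrite mem_iota /= add0n => /H ->. Qed.

Lemma count0_in (T : eqType) (P : pred T) s :
  (forall x, x \in s -> P x = false) -> count P s = 0.
Proof. by move=> H; apply/eqP; rewrite -leqn0 leqNgt -has_count; apply/hasPn => x /H ->. Qed.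

Lemma count_nth (T : Type) (x0 : T) (g : pred T) (s : seq T) :
  count (fun q => g (nth x0 s q)) (iota 0 (size s)) = count g s.
Proof. by rewrite -[in RHS](mkseq_nth x0 s) /mkseq count_map. Qed.

Lemma has_nth (T : Type) (x0 : T) (g : pred T) (s : seq T) :
  has (fun q => g (nth x0 s q)) (iota 0 (size s)) = has g s.
Proof. by rewrite -[in RHS](mkseq_nth x0 s) /mkseq has_map. Qed.

Lemma map_const_nseq (T S : Type) (a : S) (s : seq T) :
  [seq a | _ <- s] = nseq (size s) a.
Proof. by elim: s => //= x s ->. Qed.

Lemma nth_cat_r (T : Type) (x0 : T) (s1 s2 : seq T) i :
  nth x0 (s1 ++ s2) (size s1 + i) = nth x0 s2 i.
Proof. by rewrite nth_cat ltnNge leq_addr /= addKn. Qed.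

Lemma nth_cat_l (T : Type) (x0 : T) (s1 s2 : seq T) i :
  (i < size s1) -> nth x0 (s1 ++ s2) i = nth x0 s1 i.
Proof. by move=> lt; rewrite nth_cat lt. Qed.

Lemma nth_cat_shift (T : Type) (x0 : T) (s1 s2 : seq T) a i :
  size s1 = a -> nth x0 (s1 ++ s2) (a + i) = nth x0 s2 i.
Proof. by move=> <-; exact: nth_cat_r. Qed.

Lemma drop_cat_le (T : Type) n (s1 s2 : seq T) : n <= size s1 ->
  drop n (s1 ++ s2) = drop n s1 ++ s2.
Proof.
move=> h; rewrite drop_cat; case: ltnP => h' //.
have -> : n = size s1 by apply/eqP; rewrite eqn_leq h h'.
by rewrite subnn drop0 drop_size.
Qed.

Lemma minn_foldr_le (L : seq nat) d a : a \in L -> (foldr minn d L <= a).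
Proof.
elim: L => //= b L IH; rewrite inE => /orP[/eqP ->|aL]; first exact: geq_minl.
exact: leq_trans (geq_minr _ _) (IH aL).
Qed.

Lemma unzip1_block_requests b B : unzip1 (block_requests b B) = block_pages B.
Proof. by rewrite /unzip1 map_cat -!map_comp !map_id. Qed.

Lemma unzip2_block_requests b B : unzip2 (block_requests b B) = block_preds b B.
Proof. by rewrite /unzip2 map_cat -!map_comp /comp /= !map_const_nseq. Qed.

Lemma size_block_preds b B : size (block_preds b B) = size (block_pages B).
Proof. by rewrite /block_preds /block_pages size_cat !size_nseq size_cat. Qed.

Lemma unzip1_blocks b L : unzip1 (flatten (map (block_requests b) L)) = flatten (map block_pages L).
Proof.
by rewrite /unzip1 map_flatten -map_comp; congr flatten; apply: eq_map => B; exact: unzip1_block_requests.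
Qed.

Lemma unzip2_blocks b L : unzip2 (flatten (map (block_requests b) L)) = flatten (map (block_preds b) L).
Proof.
by rewrite /unzip2 map_flatten -map_comp; congr flatten; apply: eq_map => B; exact: unzip2_block_requests.
Qed.

Lemma unzip1_adv_requests b k Bs :
  unzip1 (adv_requests k b Bs) = iota 0 k ++ flatten (map block_pages Bs).
Proof. by rewrite unzip1_blocks. Qed.

Lemma unzip2_adv_requests b k Bs :
  unzip2 (adv_requests k b Bs) = nseq k b ++ flatten (map (block_preds b) Bs).
Proof. by rewrite unzip2_blocks /= /block_preds /= size_iota. Qed.

Lemma pages_but_next k C xp B : pages_but k C xp -> good_block k xp B -> pages_but k (xp :: rem (idle B) C) (idle B).
Proof.
move=> [uC sC mC] gB; have [bE sub [us ss ms] xpsw /andP[xxp xpk]] := good_blockP gB.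
have xk : (idle B < k.+1) by case/and5P: gB.
have xC : idle B \in C by rewrite mC xk xxp.
have xpC : xp \notin C by rewrite mC eqxx andbF.
have k0 : (0 < k) by rewrite -sC; case: (C) xC.
split.
- rewrite /= rem_uniq // andbT; apply: contra xpC; exact: mem_rem.
- by rewrite /= size_rem // sC prednK.
- move=> y; rewrite inE (mem_rem_uniq _ uC) inE mC.
  case: (eqVneq y xp) => [->|yxp] /=; first by rewrite xpk eq_sym xxp.
  by rewrite andbT andbC.
Qed.

Lemma mem_pages_but_next k C xp B : pages_but k C xp -> good_block k xp B ->
  forall y, (y \in xp :: rem (idle B) C) = (y \in sweep B).
Proof.
move=> IC gB y; have [_ _ m'] := pages_but_next IC gB.
have [_ _ [_ _ ms] _ _] := good_blockP gB.
by rewrite m' ms.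
Qed.

Lemma pages_but_eq k (c sw : seq nat) x : uniq c -> uniq sw -> size sw = k ->
  (forall y, (y \in sw) = (y < k.+1) && (y != x)) ->
  {subset c <= sw} -> {subset sw <= c} -> pages_but k c x.
Proof.
move=> uc us ss ms s1 s2.
have e : c =i sw by move=> y; apply/idP/idP; [exact: s1 | exact: s2].
split => //; last by move=> y; rewrite e ms.
by rewrite -ss; apply: perm_size; apply: uniq_perm.
Qed.

Lemma pages_but_iota k : pages_but k (iota 0 k) k.
Proof.
split; [exact: iota_uniq | exact: size_iota |].
by move=> y; rewrite mem_iota /= add0n ltnS ltn_neqAle andbC.
Qed.

Lemma pages_but_rev k C x : pages_but k C x -> pages_but k (rev C) x.
Proof. by case=> uC sC mC; split => [|//|y]; rewrite ?rev_uniq ?size_rev // mem_rev. Qed.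

Lemma mem_block_pages k x B y : good_block k x B -> (y \in block_pages B) = (y \in sweep B).
Proof.
case/good_blockP => _ sub _ _ _; rewrite /block_pages mem_cat.
by apply/idP/idP => [/orP[/sub|]//|->]; rewrite orbT.
Qed.

(** * Offline optimum *)

Lemma opt_cost_hits k C l t : all (fun y => y \in C) l -> opt_cost k C (l ++ t) = opt_cost k C t.
Proof. by elim: l => //= r l IH /andP[rC al]; rewrite rC IH. Qed.

Lemma opt_cost_fill k C l t : uniq (l ++ C) -> (size C + size l <= k) ->
  opt_cost k C (l ++ t) = (size l + opt_cost k (rev l ++ C) t).
Proof.
elim: l C => [|r l IH] C //=.
rewrite mem_cat negb_or => /andP[/andP[rl rC] ulC] sk.
have sC : (size C < k) by move: sk => /= sk; slia.
rewrite (negbTE rC) sC.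
have u' : uniq (l ++ r :: C).
  by rewrite -cat1s uniq_catCA /= mem_cat negb_or rl rC ulC.
have sk' : (size (r :: C) + size l <= k) by rewrite /= addSn -addnS.
by rewrite IH // rev_cons cat_rcons addSn.
Qed.

Lemma opt_cost_block k C xp B t : pages_but k C xp -> good_block k xp B ->
  (opt_cost k C (block_pages B ++ t) <= 1 + opt_cost k (xp :: rem (idle B) C) t).
Proof.
move=> IC gB; have [bE sub [us ss ms] xpsw /andP[xxp xpk]] := good_blockP gB.
have [uC sC mC] := IC.
have xk : (idle B < k.+1) by case/and5P: gB.
have xC : idle B \in C by rewrite mC xk xxp.
have xpC : xp \notin C by rewrite mC eqxx andbF.
rewrite /block_pages bE /= (negbTE xpC) sC ltnn add1n ltnS.
apply: leq_trans (minn_foldr_le _ (map_f _ xC)) _.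
rewrite opt_cost_hits //.
apply/allP => y; rewrite (mem_pages_but_next IC gB) mem_cat => /orP[/mem_behead|//].
exact: sub.
Qed.

Lemma opt_cost_blocks k Bs x C : pages_but k C x -> good_blocks k x Bs ->
  opt_cost k C (flatten (map block_pages Bs)) <= size Bs.
Proof.
elim: Bs x C => [|B Bs IH] x C IC //= /andP[gB gBs].
apply: leq_trans (opt_cost_block _ IC gB) _.
by rewrite add1n ltnS; apply: IH gBs; exact: pages_but_next.
Qed.

Lemma opt_cost_adversary k b Bs : good_blocks k k Bs ->
  opt_cost k [::] (unzip1 (adv_requests k b Bs)) <= k + size Bs.
Proof.
move=> gBs; rewrite unzip1_adv_requests opt_cost_fill ?cats0 ?iota_uniq ?size_iota //.
by rewrite leq_add2l; exact: opt_cost_blocks (pages_but_rev (pages_but_iota k)) gBs.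
Qed.

(** * Prediction errors *)

(* Wrong predictions with value [hb] per phase when the sweeps are predicted
   [b]: a sweep predicted 0 errs on the idle page of the next phase only, one
   predicted 1 on the [k - 1] other pages; in the last phase nothing is
   requested later, so a prediction 1 may be wrong on all [k] pages. *)
Definition errs_per_phase (k : nat) (hb b : bool) : nat :=
  if hb then (if b then k.-1 else 0) else (if b then 0 else 1).

Definition errs_last_phase (k : nat) (hb b : bool) : nat := if hb && b then k else 0.

Lemma count_next_errors_le k (sw sw' : seq nat) x x' b hb :
  pages_but k sw x -> pages_but k sw' x' -> x \in sw' -> x' < k.+1 ->
  count (fun y => (b == hb) && ((y \notin sw') == ~~ hb)) sw <= errs_per_phase k hb b.
Proof.
move=> [us ss ms] [_ _ ms'] xsw xk.
have E : {in sw, forall y, (y \notin sw') = (y == x')}.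
  by move=> y; rewrite ms => /andP[yk _]; rewrite ms' yk /=; case: (y == x').
have x'x : x' != x by apply: contraTneq xsw => <-; rewrite ms' eqxx andbF.
have c1 : count (pred1 x') sw = 1 by rewrite count_uniq_mem // ms xk x'x.
rewrite (@eq_in_count _ _ (fun y => (b == hb) && ((y == x') == ~~ hb))); last first.
  by move=> y /E /= ->.
case: hb; case: b => /=; rewrite ?count_pred0 //.
- rewrite (@eq_count _ _ (predC (pred1 x'))); last by move=> y /=; case: (y == x').
  by have := count_predC (pred1 x') sw; rewrite c1 ss; slia.
- by rewrite (@eq_count _ _ (pred1 x')) ?c1 // => y /=; case: (y == x').
Qed.

Lemma count_last_errors_le k (sw : seq nat) b hb : size sw = k ->
  count (fun y => (b == hb) && (false == ~~ hb)) sw <= errs_last_phase k hb b.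
Proof. by move=> ss; case: hb; case: b; rewrite /= ?count_pred0 // count_predT ss. Qed.

Lemma errs_cons_le k hb b (B : block) Bs L E :
  L <= (if Bs is [::] then errs_last_phase k hb b else errs_per_phase k hb b) ->
  E <= size Bs * errs_per_phase k hb b + (~~ nilp Bs) * errs_last_phase k hb b ->
  L + E <= size (B :: Bs) * errs_per_phase k hb b + (~~ nilp (B :: Bs)) * errs_last_phase k hb b.
Proof. by case: Bs => [|B' Bs] /= hL hE; lia. Qed.

(** * Discard predictions *)

Lemma lfd_caches_hits k tb C l t : all (fun y => y \in C) l ->
  lfd_caches k tb C (l ++ t) = nseq (size l) C ++ lfd_caches k tb C t.
Proof. by elim: l => //= r l IH /andP[rC al]; rewrite rC IH. Qed.

Lemma lfd_caches_fill k tb C l t : uniq (l ++ C) -> (size C + size l <= k) ->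
  exists cpre, [/\ size cpre = size l,
    (forall j, (j < size l) -> {subset C <= nth [::] cpre j}),
    (forall o j, (o <= j < size l) -> nth 0 l o \in nth [::] cpre j) &
    lfd_caches k tb C (l ++ t) = cpre ++ lfd_caches k tb (rev l ++ C) t].
Proof.
elim: l C => [|r l IH] C /=.
  by move=> _ _; exists [::]; split => //=; intros; slia.
rewrite mem_cat negb_or => /andP[/andP[rl rC] ulC] sk.
have sC : (size C < k) by move: sk => /= sk; slia.
rewrite (negbTE rC) sC.
have u' : uniq (l ++ r :: C).
  by rewrite -cat1s uniq_catCA /= mem_cat negb_or rl rC ulC.
have sk' : (size (r :: C) + size l <= k) by rewrite /= addSn -addnS.
have [cp [s1 s2 s3 e]] := IH (r :: C) u' sk'.
exists ((r :: C) :: cp); split.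
- by rewrite /= s1.
- move=> [|j] /= jl y yC; first by rewrite inE yC orbT.
  by apply: (s2 j) => //; rewrite inE yC orbT.
- move=> [|o] [|j] //=.
  + by move=> _; exact: mem_head.
  + by move=> jl; apply: (s2 j) => //; exact: mem_head.
  + by move=> H; apply: s3.
- by rewrite e rev_cons cat_rcons.
Qed.

Lemma furthest_spec (fut C : seq nat) d :
  let v := foldr (fun x y => if (index y fut < index x fut) then x else y) d C in
  v \in d :: C /\ (forall c, c \in C -> (index c fut <= index v fut)).
Proof.
elim: C => [|c C [IHm IHi]] /=; first by split => //; rewrite mem_head.
set v := foldr _ d C in IHm IHi *.
case: ifPn => lt; split.
- by rewrite !inE eqxx orbT.
- move=> c'; rewrite inE => /orP[/eqP->//|c'C].
  exact: leq_trans (IHi _ c'C) (ltnW lt).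
- by move: IHm; rewrite !inE => /orP[->//|->]; rewrite !orbT.
- move=> c'; rewrite inE => /orP[/eqP->|c'C]; [by rewrite leqNgt | exact: IHi].
Qed.

Lemma lfd_victim_unrequested tb C fut x : valid_tb tb ->
  [seq y <- C | y \notin fut] = [:: x] -> lfd_victim tb C fut = x.
Proof.
move=> vtb e; rewrite /lfd_victim e /=.
have : tb (sort leq [:: x]) \in sort leq [:: x] by apply: vtb; rewrite -size_eq0 size_sort.
by rewrite mem_sort inE => /eqP.
Qed.

Lemma lfd_victim_furthest tb C fut x : x \in C -> all (mem fut) C ->
  (forall c, c \in C -> c != x -> index c fut < index x fut) -> lfd_victim tb C fut = x.
Proof.
move=> xC aC lt; rewrite /lfd_victim.
have -> : [seq y <- C | y \notin fut] = [::].
  by transitivity (filter pred0 C); [apply: eq_in_filter => c /(allP aC) /= -> | exact: filter_pred0].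
have [vm vi] := furthest_spec fut C (head 0 C); set v := foldr _ _ _ in vm vi *.
have vC : v \in C.
  by move: vm; rewrite inE => /orP[/eqP->|//]; case: (C) xC => // c C' _; exact: mem_head.
by apply/eqP; apply: contraT => vx; have := vi x xC; rewrite leqNgt lt.
Qed.

Lemma lfd_victim_idle k tb C x B t : valid_tb tb -> pages_but k C x -> good_block k x B ->
  lfd_victim tb C (behead (probes B) ++ sweep B ++ t) = idle B.
Proof.
move=> vtb [uC sC mC] gB; have [_ sub [_ _ ms] _ /andP[yx _]] := good_blockP gB.
have yC : idle B \in C by rewrite mC (good_block_idle gB) yx.
set l := behead (probes B) ++ sweep B; rewrite catA -/l.
have yl : idle B \notin l.
  rewrite mem_cat negb_or ms eqxx andbF andbT.
  by apply/negP => /mem_behead /sub; rewrite ms eqxx andbF.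
have Cl : {in C, forall c, c != idle B -> c \in l}.
  by move=> c; rewrite mC mem_cat ms => /andP[-> _] ->; rewrite orbT.
case yt: (idle B \in t).
- apply: lfd_victim_furthest => // [|c cC cy].
    apply/allP => c cC; rewrite /= mem_cat.
    by case: (eqVneq c (idle B)) => [->|/(Cl c cC) ->]; rewrite ?yt ?orbT.
  rewrite (index_cat c l t) (index_cat (idle B) l t) (negbTE yl) Cl //=.
  by apply: leq_trans (leq_addr _ _); rewrite index_mem Cl.
- apply: lfd_victim_unrequested => //.
  transitivity (filter (pred1 (idle B)) C); last exact: filter_pred1_uniq.
  apply: eq_in_filter => c cC /=; rewrite mem_cat.
  by case: (eqVneq c (idle B)) => [->|cy]; rewrite ?(negbTE yl) ?yt ?Cl.
Qed.

Lemma lfd_caches_block k tb C xp B t : valid_tb tb -> pages_but k C xp -> good_block k xp B ->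
  lfd_caches k tb C (block_pages B ++ t) =
  nseq (size (block_pages B)) (xp :: rem (idle B) C) ++ lfd_caches k tb (xp :: rem (idle B) C) t.
Proof.
move=> vtb IC gB; have [bE sub [us ss ms] xpsw /andP[xxp xpk]] := good_blockP gB.
have [uC sC mC] := IC.
have xpC : xp \notin C by rewrite mC eqxx andbF.
have vx : lfd_victim tb C ((behead (probes B) ++ sweep B) ++ t) = idle B.
  by rewrite -catA; exact: (@lfd_victim_idle k tb C xp B t vtb IC gB).
rewrite /block_pages bE /= (negbTE xpC) sC ltnn vx lfd_caches_hits //.
apply/allP => y; rewrite (mem_pages_but_next IC gB) mem_cat => /orP[/mem_behead|//].
exact: sub.
Qed.

Definition discard_truth (rs : seq nat) (cs : seq (seq nat)) (i : nat) : bool :=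
  let r := nth 0 rs i in
  has (fun j => r \notin nth [::] cs j) (index_iota i.+1 (i.+1 + index r (drop i.+1 rs))).

Lemma discard_truth_shift pre rs cpre cs i : size cpre = size pre ->
  discard_truth (pre ++ rs) (cpre ++ cs) (size pre + i) = discard_truth rs cs i.
Proof.
move=> sc; rewrite /discard_truth -!addnS nth_cat_r drop_cat ltnNge leq_addr /= addKn.
rewrite /index_iota !addKn iotaDl has_map; apply: eq_has => j /=.
by rewrite -sc nth_cat_r.
Qed.

Definition discard_errors (ps : seq bool) (rs : seq nat) (cs : seq (seq nat)) (hb : bool) : nat :=
  count (fun i => (nth false ps i == hb) && (discard_truth rs cs i == ~~ hb)) (iota 0 (size rs)).

Lemma eta_discardE k tb s hb :
  eta_discard k tb s hb = discard_errors (unzip2 s) (unzip1 s) (lfd_caches k tb [::] (unzip1 s)) hb.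
Proof. by rewrite /eta_discard /discard_errors size_map. Qed.

Lemma discard_errors_cat psB rsB cB ps rs cs hb :
  size psB = size rsB -> size cB = size rsB ->
  discard_errors (psB ++ ps) (rsB ++ rs) (cB ++ cs) hb =
  (count (fun i => (nth false psB i == hb) && (discard_truth (rsB ++ rs) (cB ++ cs) i == ~~ hb))
     (iota 0 (size rsB)) + discard_errors ps rs cs hb).
Proof.
move=> sp sc; rewrite /discard_errors size_cat count_iotaD; congr (_ + _).
  apply: eq_in_count => i; rewrite mem_iota /= => lt.
  by rewrite nth_cat_l // sp.
apply: eq_count => i /=; by rewrite -{1}sp nth_cat_r discard_truth_shift.
Qed.

Definition keeps_pages (B : seq nat) (cB : seq (seq nat)) :=
  forall o j, o <= j < size B -> nth 0 B o \in nth [::] cB j.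

(* A probed page stays cached until it is swept. *)
Lemma discard_truth_probe (body sw rs : seq nat) (cB cs : seq (seq nat)) o : {subset body <= sw} ->
  size cB = size (body ++ sw) -> keeps_pages (body ++ sw) cB -> o < size body ->
  discard_truth ((body ++ sw) ++ rs) (cB ++ cs) o = false.
Proof.
move=> sub sc c1 ob.
have ysw : nth 0 body o \in sw by apply: sub; exact: mem_nth.
have sw0 : 0 < size sw by case: (sw) ysw.
have oB1 : o.+1 < size (body ++ sw) by rewrite size_cat; slia.
have oB : o < size (body ++ sw) by apply: ltnW.
have yB : nth 0 ((body ++ sw) ++ rs) o = nth 0 (body ++ sw) o by rewrite nth_cat_l.
have yb : nth 0 (body ++ sw) o = nth 0 body o by rewrite nth_cat_l.
have yd : nth 0 body o \in drop o.+1 (body ++ sw).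
  rewrite drop_cat; case: ifP => h; first by rewrite mem_cat ysw orbT.
  have -> : o.+1 - size body = 0 by slia.
  by rewrite drop0.
have idx : index (nth 0 body o) (drop o.+1 ((body ++ sw) ++ rs)) < size (body ++ sw) - o.+1.
  by rewrite drop_cat oB1 index_cat yd -size_drop index_mem.
rewrite /discard_truth /= yB yb; apply/hasPn => j; rewrite mem_index_iota => /andP[oj jlt].
have jB : j < size cB.
  rewrite sc; apply: ltn_trans jlt _.
  by rewrite -[X in _ < X](subnKC (ltnW oB1)) ltn_add2l.
rewrite nth_cat_l // negbK -yb; apply: c1; rewrite -sc jB andbT; exact: ltnW.
Qed.

Definition evicted_before (y : nat) (rs : seq nat) (cs : seq (seq nat)) : bool :=
  has (fun j => y \notin nth [::] cs j) (iota 0 (index y rs)).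

Lemma discard_truth_sweep (body sw rs : seq nat) (cB cs : seq (seq nat)) q : uniq sw ->
  size cB = size (body ++ sw) -> keeps_pages (body ++ sw) cB -> q < size sw ->
  discard_truth ((body ++ sw) ++ rs) (cB ++ cs) (size body + q) =
  evicted_before (nth 0 sw q) rs cs.
Proof.
move=> us sc c1 qs.
set y := nth 0 sw q.
have yB : nth 0 ((body ++ sw) ++ rs) (size body + q) = y by rewrite -catA nth_cat_r nth_cat_l.
have dr : drop (size body + q).+1 ((body ++ sw) ++ rs) = drop q.+1 sw ++ rs.
  by rewrite -catA -addnS drop_cat ltnNge leq_addr /= addKn drop_cat_le.
have ynd : y \notin drop q.+1 sw.
  by have := drop_uniq q us; rewrite (drop_nth 0 qs) /= => /andP[].
have idx : index y (drop q.+1 sw ++ rs) = size (drop q.+1 sw) + index y rs.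
  by rewrite index_cat (negbTE ynd).
rewrite /discard_truth /= yB dr idx size_drop.
have -> : (size body + q).+1 + (size sw - q.+1 + index y rs) =
          size (body ++ sw) + index y rs by rewrite size_cat; slia.
rewrite (@index_iota_cat _ (size (body ++ sw)) _); last by rewrite size_cat; slia.
rewrite has_cat.
have -> : has (fun j => y \notin nth [::] (cB ++ cs) j)
            (index_iota (size body + q).+1 (size (body ++ sw))) = false.
  apply/hasPn => j; rewrite mem_index_iota => /andP[oj jlt].
  have jB : j < size cB by rewrite sc.
  have := c1 (size body + q) j; rewrite nth_cat_r => H.
  by rewrite nth_cat_l // negbK H // jlt andbT ltnW.
rewrite /= /index_iota addKn iota_shift has_map; apply: eq_has => j /=.
by rewrite -sc nth_cat_r.
Qed.

Lemma discard_block_errors (body sw rs : seq nat) (cB cs : seq (seq nat)) b hb : {subset body <= sw} -> uniq sw ->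
  size cB = size (body ++ sw) -> keeps_pages (body ++ sw) cB ->
  count (fun i => (nth false (nseq (size body) false ++ nseq (size sw) b) i == hb) &&
                  (discard_truth ((body ++ sw) ++ rs) (cB ++ cs) i == ~~ hb))
        (iota 0 (size (body ++ sw)))
  = count (fun y => (b == hb) && (evicted_before y rs cs == ~~ hb)) sw.
Proof.
move=> sub us sc c1.
rewrite size_cat count_iotaD.
rewrite [count _ (iota 0 (size body))]count0_in ?add0n; last first.
  move=> o; rewrite mem_iota /= add0n => ob.
  rewrite nth_cat_l ?size_nseq // nth_nseq ob discard_truth_probe //; by case: hb.
rewrite -(@count_nth _ 0 _ sw).
apply: eq_in_count => q; rewrite mem_iota /= add0n => qs.
by rewrite (nth_cat_shift _ _ _ (size_nseq _ _)) nth_nseq qs discard_truth_sweep.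
Qed.

Lemma evicted_before_next y (B' rs' C' : seq nat) (cs' : seq (seq nat)) (sw' : seq nat) : (forall z, (z \in C') = (z \in sw')) ->
  {subset sw' <= B'} -> head 0 B' != y -> B' != [::] ->
  evicted_before y (B' ++ rs') (nseq (size B') C' ++ cs') = (y \notin sw').
Proof.
move=> mC sub hy bn.
have sB : 0 < size B' by case: (B') bn.
case: (boolP (y \in sw')) => ysw /=.
- apply/hasPn => j; rewrite mem_iota /= add0n => jl.
  have yB : y \in B' by apply: sub.
  move: jl; rewrite index_cat yB => jl.
  have jB : j < size B' by apply: ltn_trans jl _; rewrite index_mem.
  by rewrite nth_cat_l ?size_nseq // nth_nseq jB mC ysw.
- apply/hasP; exists 0.
    rewrite mem_iota /= add0n; case: (B') hy bn => // c B'' hy _ /=.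
    by rewrite (negbTE hy).
  by rewrite nth_cat_l ?size_nseq // nth_nseq sB mC.
Qed.

Lemma sweep_discard_errors_le k tb b hb C x (sw : seq nat) Bs : valid_tb tb ->
  pages_but k sw x -> pages_but k C x -> good_blocks k x Bs ->
  count (fun y => (b == hb) && (evicted_before y (flatten (map block_pages Bs))
           (lfd_caches k tb C (flatten (map block_pages Bs))) == ~~ hb)) sw
  <= (if Bs is [::] then errs_last_phase k hb b else errs_per_phase k hb b).
Proof.
move=> vtb SW IC; case: Bs => [|B Bs] /=.
  by move=> _; apply: count_last_errors_le; case: SW.
case/andP => gB _; have [bE sub SW' xsw _] := good_blockP gB.
rewrite (lfd_caches_block _ vtb IC gB).
rewrite (@eq_in_count _ _ (fun y => (b == hb) && ((y \notin sweep B) == ~~ hb))).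
  exact: count_next_errors_le SW SW' xsw (good_block_idle gB).
move=> y ysw /=; rewrite (@evicted_before_next _ _ _ _ _ (sweep B)) //.
- exact: (mem_pages_but_next IC gB).
- by move=> z zs; rewrite /block_pages mem_cat zs orbT.
- by rewrite /block_pages bE /=; apply: contraTneq ysw => <-; case: SW => _ _ ->; rewrite eqxx andbF.
- by rewrite /block_pages bE.
Qed.

Lemma discard_errors_blocks k tb b hb Bs x C : valid_tb tb ->
  pages_but k C x -> good_blocks k x Bs ->
  discard_errors (flatten (map (block_preds b) Bs)) (flatten (map block_pages Bs))
       (lfd_caches k tb C (flatten (map block_pages Bs))) hb
  <= size Bs * errs_per_phase k hb b + (~~ nilp Bs) * errs_last_phase k hb b.
Proof.
move=> vtb; elim: Bs x C => [|B Bs IH] x C IC /=; first by rewrite /discard_errors.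
case/andP => gB gBs; have [_ sub SW _ _] := good_blockP gB.
have IC1 := pages_but_next IC gB.
have c1 : keeps_pages (block_pages B) (nseq (size (block_pages B)) (x :: rem (idle B) C)).
  move=> o j /andP[oj jl]; rewrite nth_nseq jl (mem_pages_but_next IC gB).
  rewrite /block_pages nth_cat; case: ltnP => h; first by apply: sub; exact: mem_nth.
  by apply: mem_nth; move: jl; rewrite /block_pages size_cat; slia.
rewrite (lfd_caches_block _ vtb IC gB) discard_errors_cat ?size_block_preds ?size_nseq //.
apply: (errs_cons_le B _ (IH _ _ IC1 gBs)).
rewrite discard_block_errors ?size_nseq //; last by case: SW.
exact: sweep_discard_errors_le vtb SW IC1 gBs.
Qed.

Lemma eta_discard_adversary k tb b hb Bs : valid_tb tb -> good_blocks k k Bs ->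
  eta_discard k tb (adv_requests k b Bs) hb <=
  (size Bs).+1 * errs_per_phase k hb b + errs_last_phase k hb b.
Proof.
move=> vtb gBs; rewrite eta_discardE unzip1_adv_requests unzip2_adv_requests.
set rs := flatten (map block_pages Bs).
have u0 : uniq (iota 0 k ++ [::]) by rewrite cats0 iota_uniq.
have s0 : size (@nil nat) + size (iota 0 k) <= k by rewrite size_iota.
have [cp [s1 _ s3 e]] := @lfd_caches_fill k tb [::] (iota 0 k) rs u0 s0.
have IC0 : pages_but k (rev (iota 0 k)) k := pages_but_rev (pages_but_iota k).
rewrite e cats0 discard_errors_cat ?size_nseq ?s1 ?size_iota //.
apply: leq_trans (errs_cons_le (fill_block k) _ (discard_errors_blocks b hb vtb IC0 gBs)) _.
  have := @discard_block_errors [::] (iota 0 k) rs cp (lfd_caches k tb (rev (iota 0 k)) rs)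
    b hb (fun _ => ltac:(done)) (iota_uniq 0 k) s1 s3.
  rewrite /= size_iota => ->.
  exact: sweep_discard_errors_le vtb (pages_but_iota k) IC0 gBs.
by rewrite /= mul1n.
Qed.

(** * Phase predictions *)

Lemma phase_ids_grow k (cur : seq nat) j (l t Q : seq nat) : uniq cur -> {subset cur <= Q} -> {subset l <= Q} ->
  uniq Q -> size Q <= k ->
  exists cur', [/\ phase_ids k cur j (l ++ t) = nseq (size l) j ++ phase_ids k cur' j t,
     uniq cur', {subset cur' <= Q}, {subset cur <= cur'} & {subset l <= cur'}].
Proof.
elim: l cur => [|r l IH] cur ucur cQ lQ uQ sQ /=.
  by exists cur; split => // y; rewrite in_nil.
have rQ : r \in Q by apply: lQ; exact: mem_head.
have lQ' : {subset l <= Q} by move=> y yl; apply: lQ; rewrite inE yl orbT.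
case: ifPn => rc.
- have [c' [e u' s1 s2 s3]] := IH cur ucur cQ lQ' uQ sQ.
  exists c'; split => //; first by rewrite e.
  by move=> y; rewrite inE => /orP[/eqP->|]; [exact: s2 | exact: s3].
- have rcQ : {subset r :: cur <= Q} by move=> y; rewrite inE => /orP[/eqP->//|/cQ].
  have urc : uniq (r :: cur) by rewrite /= rc ucur.
  have sc : size cur < k.
    have := uniq_leq_size urc rcQ; rewrite /=; slia.
  rewrite sc.
  have [c' [e u' s1 s2 s3]] := IH (r :: cur) urc rcQ lQ' uQ sQ.
  exists c'; split => //; first by rewrite e.
  + by move=> y yc; apply: s2; rewrite inE yc orbT.
  + move=> y; rewrite inE => /orP[/eqP->|]; last exact: s3.
    by apply: s2; exact: mem_head.
Qed.

Lemma phase_ids_block k cur m xp B t : pages_but k cur xp -> good_block k xp B ->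
  exists cur', phase_ids k cur m (block_pages B ++ t) =
    nseq (size (block_pages B)) m.+1 ++ phase_ids k cur' m.+1 t /\ pages_but k cur' (idle B).
Proof.
move=> [uc sc mc] gB; have [bE sub [us ss ms] xpsw /andP[xxp xpk]] := good_blockP gB.
have xpc : xp \notin cur by rewrite mc eqxx andbF.
rewrite /block_pages bE /= (negbTE xpc) sc ltnn.
have lQ : {subset behead (probes B) ++ sweep B <= sweep B}.
  by move=> y; rewrite mem_cat => /orP[/mem_behead/sub|].
have h1 : {subset [:: xp] <= sweep B} by move=> y; rewrite inE => /eqP->.
have h2 : size (sweep B) <= k by rewrite ss.
have [c' [e u' s1 s2 s3]] := @phase_ids_grow k [:: xp] m.+1 (behead (probes B) ++ sweep B) t (sweep B)
  (erefl _) h1 lQ us h2.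
exists c'; split; first by rewrite e.
apply: pages_but_eq u' us ss ms s1 _ => y ysw; apply: s3; by rewrite mem_cat ysw orbT.
Qed.

Lemma phase_ids_fill k t : exists c0,
  phase_ids k [::] 0 (iota 0 k ++ t) = nseq k 0 ++ phase_ids k c0 0 t /\ pages_but k c0 k.
Proof.
have h1 : {subset [::] <= iota 0 k} by [].
have h2 : {subset iota 0 k <= iota 0 k} by [].
have h3 : size (iota 0 k) <= k by rewrite size_iota.
have [c' [e u' s1 s2 s3]] := @phase_ids_grow k [::] 0 (iota 0 k) t (iota 0 k)
  (erefl _) h1 h2 (iota_uniq _ _) h3.
exists c'; split; first by rewrite e size_iota.
apply: pages_but_eq u' (iota_uniq 0 k) _ _ s1 s3; first by rewrite size_iota.
by move=> y; rewrite mem_iota /= add0n ltnS ltn_neqAle andbC.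
Qed.

Lemma phase_ids_ge k cur j rs : all (fun i => j <= i) (phase_ids k cur j rs).
Proof.
elim: rs cur j => //= r rs IH cur j.
case: ifP => _; first by rewrite /= leqnn /=; exact: IH.
case: ifP => _; first by rewrite /= leqnn /=; exact: IH.
rewrite /= leqnSn /=; apply: sub_all (IH _ _) => i; exact: ltnW.
Qed.

Lemma size_phase_ids k cur j rs : size (phase_ids k cur j rs) = size rs.
Proof.
elim: rs cur j => //= r rs IH cur j.
by case: ifP => _; [|case: ifP => _] => /=; rewrite IH.
Qed.

Lemma phase_ids_blocks_gt k cur m xp Bs : pages_but k cur xp -> good_blocks k xp Bs ->
  all (fun i => m < i) (phase_ids k cur m (flatten (map block_pages Bs))).
Proof.
move=> IC; case: Bs => [|B Bs] //= /andP[gB _].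
have [c' [e _]] := @phase_ids_block k cur m xp B (flatten (map block_pages Bs)) IC gB.
rewrite e all_cat; apply/andP; split; last exact: phase_ids_ge.
by apply/allP => i; rewrite mem_nseq => /andP[_ /eqP->].
Qed.

Definition counted (ph rs : seq nat) (i : nat) : bool :=
  has (fun i' => nth 0 ph i' == (nth 0 ph i).+1) (iota 0 (size rs)) &&
  ~~ has (fun i' => (nth 0 ph i' == nth 0 ph i) && (nth 0 rs i' == nth 0 rs i))
         (iota i.+1 (size rs - i.+1)).

Definition phase_truth (ph rs : seq nat) (i : nat) : bool :=
  ~~ has (fun i' => (nth 0 ph i' == (nth 0 ph i).+1) && (nth 0 rs i' == nth 0 rs i))
         (iota 0 (size rs)).

Definition phase_errors (ps : seq bool) (ph rs : seq nat) (hb : bool) : nat :=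
  count (fun i => [&& counted ph rs i, nth false ps i == hb & phase_truth ph rs i == ~~ hb])
    (iota 0 (size rs)).

Lemma eta_phaseE k s hb :
  eta_phase k s hb = phase_errors (unzip2 s) (phase_ids k [::] 0 (unzip1 s)) (unzip1 s) hb.
Proof. by rewrite /eta_phase /phase_errors size_map. Qed.

Lemma counted_shift pre rs m phR i : all (fun j => m < j) phR -> size phR = size rs ->
  i < size rs ->
  counted (nseq (size pre) m ++ phR) (pre ++ rs) (size pre + i) = counted phR rs i.
Proof.
move=> aph sph ir.
have sn : size (nseq (size pre) m) = size pre by rewrite size_nseq.
have mJ : m < nth 0 phR i by apply: (allP aph); apply: mem_nth; rewrite sph.
have mJ' : (m == (nth 0 phR i).+1) = false by apply: ltn_eqF; rewrite ltnS; exact: ltnW.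
rewrite /counted (nth_cat_shift _ _ _ sn) nth_cat_r size_cat has_iotaD.
rewrite has_iota_false /=; last first.
  by move=> i' lt; rewrite nth_cat sn lt nth_nseq lt mJ'.
congr (_ && ~~ _).
  by apply: eq_has => i' /=; rewrite (nth_cat_shift _ _ _ sn).
rewrite -addnS subnDl iotaDl has_map; apply: eq_has => i' /=.
by rewrite (nth_cat_shift _ _ _ sn) nth_cat_r.
Qed.

Lemma phase_truth_shift pre rs m phR i : all (fun j => m < j) phR -> size phR = size rs ->
  i < size rs ->
  phase_truth (nseq (size pre) m ++ phR) (pre ++ rs) (size pre + i) = phase_truth phR rs i.
Proof.
move=> aph sph ir.
have sn : size (nseq (size pre) m) = size pre by rewrite size_nseq.
have mJ : m < nth 0 phR i by apply: (allP aph); apply: mem_nth; rewrite sph.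
have mJ' : (m == (nth 0 phR i).+1) = false by apply: ltn_eqF; rewrite ltnS; exact: ltnW.
rewrite /phase_truth (nth_cat_shift _ _ _ sn) nth_cat_r size_cat has_iotaD.
rewrite has_iota_false /=; last first.
  by move=> i' lt; rewrite nth_cat sn lt nth_nseq lt mJ'.
by congr (~~ _); apply: eq_has => i' /=; rewrite (nth_cat_shift _ _ _ sn) nth_cat_r.
Qed.

Lemma phase_errors_cat psB rsB ps phR rs j hb :
  size psB = size rsB -> size phR = size rs -> all (fun i => j < i) phR ->
  phase_errors (psB ++ ps) (nseq (size rsB) j ++ phR) (rsB ++ rs) hb =
  count (fun i => [&& counted (nseq (size rsB) j ++ phR) (rsB ++ rs) i,
                      nth false psB i == hb &
                      phase_truth (nseq (size rsB) j ++ phR) (rsB ++ rs) i == ~~ hb])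
    (iota 0 (size rsB)) + phase_errors ps phR rs hb.
Proof.
move=> sp sph aph; rewrite /phase_errors size_cat count_iotaD; congr (_ + _).
  apply: eq_in_count => i; rewrite mem_iota /= add0n => lt.
  by rewrite nth_cat_l // sp.
apply: eq_in_count => i; rewrite mem_iota /= add0n => lt.
by rewrite counted_shift // phase_truth_shift // -{1}sp nth_cat_r.
Qed.

Lemma counted_probe (body sw : seq nat) m (phR rs : seq nat) o : {subset body <= sw} ->
  o < size body ->
  counted (nseq (size (body ++ sw)) m ++ phR) ((body ++ sw) ++ rs) o = false.
Proof.
move=> sub ob.
have oB : o < size (body ++ sw) by rewrite size_cat ltn_addr.
have e1 : nth 0 (nseq (size (body ++ sw)) m ++ phR) o = m.
  by rewrite nth_cat_l ?size_nseq // nth_nseq oB.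
have e2 : nth 0 ((body ++ sw) ++ rs) o = nth 0 body o by rewrite nth_cat_l // nth_cat ob.
have ysw : nth 0 body o \in sw by apply: sub; exact: mem_nth.
set y := nth 0 body o in e2 ysw.
have pB : size body + index y sw < size (body ++ sw) by rewrite size_cat ltn_add2l index_mem.
rewrite /counted e1 e2; apply/andP => [[_]]; apply/negP; rewrite negbK; apply/hasP.
exists (size body + index y sw).
  rewrite mem_iota size_cat; move: pB; rewrite size_cat; slia.
rewrite nth_cat_l ?size_nseq // nth_nseq pB eqxx /=.
by rewrite nth_cat_l // nth_cat_r nth_index.
Qed.

(* A sweep request is the last request to its page within its phase. *)
Lemma counted_sweep (body sw : seq nat) m (phR rs : seq nat) q : uniq sw -> q < size sw ->
  all (fun j => m < j) phR -> size phR = size rs ->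
  counted (nseq (size (body ++ sw)) m ++ phR) ((body ++ sw) ++ rs) (size body + q) =
  has (fun i => nth 0 phR i == m.+1) (iota 0 (size rs)).
Proof.
move=> us qs aph sph.
have sB : size (nseq (size (body ++ sw)) m) = size (body ++ sw) by rewrite size_nseq.
have oB : size body + q < size (body ++ sw) by rewrite size_cat ltn_add2l.
have e1 : nth 0 (nseq (size (body ++ sw)) m ++ phR) (size body + q) = m.
  by rewrite nth_cat_l ?size_nseq // nth_nseq oB.
have e2 : nth 0 ((body ++ sw) ++ rs) (size body + q) = nth 0 sw q.
  by rewrite nth_cat_l // nth_cat_r.
rewrite /counted e1 e2 [size ((body ++ sw) ++ rs)]size_cat has_iotaD.
rewrite has_iota_false /=; last first.
  move=> i lt; rewrite nth_cat_l ?size_nseq // nth_nseq lt.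
  by apply: negbTE; rewrite neq_ltn ltnSn.
have -> : has (fun i => nth 0 (nseq (size (body ++ sw)) m ++ phR) (size (body ++ sw) + i) == m.+1)
            (iota 0 (size rs)) = has (fun i => nth 0 phR i == m.+1) (iota 0 (size rs)).
  by apply: eq_has => i /=; rewrite (nth_cat_shift _ _ _ sB).
apply/andP/idP => [[]//|H]; split => //.
apply/hasPn => i; rewrite mem_iota => /andP[lo hi].
case: (ltnP i (size (body ++ sw))) => iB.
- have [q' iq] : exists q', i = size body + q'.
    by exists (i - size body); rewrite subnKC //; move: lo; slia.
  subst i.
  have q's : q' < size sw by move: iB; rewrite size_cat ltn_add2l.
  rewrite nth_cat_l ?size_nseq // nth_nseq iB eqxx /= nth_cat_l // nth_cat_r.
  rewrite (nth_uniq _ q's qs us); apply/negP => /eqP e; move: lo; rewrite e; slia.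
- have [i' iq] : exists i', i = size (body ++ sw) + i' by exists (i - size (body ++ sw)); rewrite subnKC.
  subst i.
  rewrite (nth_cat_shift _ _ _ sB).
  have : i' < size rs by move: hi; rewrite size_cat; slia.
  rewrite -sph => i'l; have := allP aph _ (mem_nth 0 i'l).
  by case: (nth 0 phR i' =P m) => // ->; rewrite ltnn.
Qed.

Lemma phase_truth_block (B : seq nat) m (phR rs : seq nat) o : o < size B -> size phR = size rs ->
  phase_truth (nseq (size B) m ++ phR) (B ++ rs) o =
  ~~ has (fun i => (nth 0 phR i == m.+1) && (nth 0 rs i == nth 0 B o)) (iota 0 (size rs)).
Proof.
move=> oB sph.
have sB : size (nseq (size B) m) = size B by rewrite size_nseq.
have e1 : nth 0 (nseq (size B) m ++ phR) o = m by rewrite nth_cat_l ?size_nseq // nth_nseq oB.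
have e2 : nth 0 (B ++ rs) o = nth 0 B o by rewrite nth_cat_l.
rewrite /phase_truth e1 e2 size_cat has_iotaD has_iota_false /=; last first.
  move=> i lt; rewrite nth_cat_l ?size_nseq // nth_nseq lt.
  by have -> : (m == m.+1) = false by apply: negbTE; rewrite neq_ltn ltnSn.
by congr (~~ _); apply: eq_has => i /=; rewrite (nth_cat_shift _ _ _ sB) nth_cat_r.
Qed.

Definition phase_nonempty (ph rs : seq nat) (j : nat) : bool :=
  has (fun i => nth 0 ph i == j) (iota 0 (size rs)).

Definition in_phase (ph rs : seq nat) (j y : nat) : bool :=
  has (fun i => (nth 0 ph i == j) && (nth 0 rs i == y)) (iota 0 (size rs)).

Lemma phase_block_errors (body sw : seq nat) m (phR rs : seq nat) b hb : {subset body <= sw} -> uniq sw ->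
  all (fun j => m < j) phR -> size phR = size rs ->
  count (fun i => [&& counted (nseq (size (body ++ sw)) m ++ phR) ((body ++ sw) ++ rs) i,
                      nth false (nseq (size body) false ++ nseq (size sw) b) i == hb &
                      phase_truth (nseq (size (body ++ sw)) m ++ phR) ((body ++ sw) ++ rs) i == ~~ hb])
    (iota 0 (size (body ++ sw))) =
  count (fun y => [&& phase_nonempty phR rs m.+1, b == hb &
                      (~~ in_phase phR rs m.+1 y) == ~~ hb]) sw.
Proof.
move=> sub us aph sph.
rewrite [X in count _ (iota 0 X)]size_cat count_iotaD.
rewrite [count _ (iota 0 (size body))]count0_in ?add0n; last first.
  move=> o; rewrite mem_iota /= add0n => ob.
  by rewrite counted_probe.
rewrite -(@count_nth _ 0 _ sw).
apply: eq_in_count => q; rewrite mem_iota /= add0n => qs.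
have oB : size body + q < size (body ++ sw) by rewrite size_cat ltn_add2l.
rewrite counted_sweep // (nth_cat_shift _ _ _ (size_nseq _ _)) nth_nseq qs phase_truth_block //.
by rewrite nth_cat_r.
Qed.

Lemma has_next_phase (B' : seq nat) m (phR' rs' : seq nat) : B' != [::] ->
  phase_nonempty (nseq (size B') m.+1 ++ phR') (B' ++ rs') m.+1.
Proof.
move=> bn; have sB : 0 < size B' by case: (B') bn.
rewrite /phase_nonempty; apply/hasP; exists 0; first by rewrite mem_iota size_cat; slia.
by rewrite nth_cat_l ?size_nseq // nth_nseq sB.
Qed.

Lemma requested_next_phase (B' : seq nat) m (phR' rs' : seq nat) y :
  all (fun j => m.+1 < j) phR' -> size phR' = size rs' ->
  in_phase (nseq (size B') m.+1 ++ phR') (B' ++ rs') m.+1 y = (y \in B').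
Proof.
move=> aph sph.
have sB : size (nseq (size B') m.+1) = size B' by rewrite size_nseq.
rewrite /in_phase size_cat has_iotaD.
have -> : has (fun i => (nth 0 (nseq (size B') m.+1 ++ phR') (size B' + i) == m.+1) &&
     (nth 0 (B' ++ rs') (size B' + i) == y)) (iota 0 (size rs')) = false.
  apply/hasPn => i; rewrite mem_iota /= add0n => il.
  rewrite (nth_cat_shift _ _ _ sB); rewrite -sph in il; have := allP aph _ (mem_nth 0 il).
  by case: (nth 0 phR' i =P m.+1) => // ->; rewrite ltnn.
rewrite orbF -has_pred1 -(@has_nth _ 0 _ B'); apply: eq_in_has => i.
rewrite mem_iota /= add0n => il.
by rewrite nth_cat_l ?size_nseq // nth_nseq il eqxx nth_cat_l.
Qed.

Lemma sweep_phase_errors_le k b hb cur x j (sw : seq nat) Bs :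
  pages_but k sw x -> pages_but k cur x -> good_blocks k x Bs ->
  count (fun y => [&& phase_nonempty (phase_ids k cur j (flatten (map block_pages Bs)))
                        (flatten (map block_pages Bs)) j.+1, b == hb &
      (~~ in_phase (phase_ids k cur j (flatten (map block_pages Bs)))
                   (flatten (map block_pages Bs)) j.+1 y) == ~~ hb]) sw
  <= (if Bs is [::] then errs_last_phase k hb b else errs_per_phase k hb b).
Proof.
move=> SW IC; case: Bs => [|B Bs] /=; first by move=> _; rewrite count_pred0.
case/andP => gB gBs; have [bE _ SW' xsw _] := good_blockP gB.
have [cur' [e IC']] := phase_ids_block j (flatten (map block_pages Bs)) IC gB.
have bn : block_pages B != [::] by rewrite /block_pages bE.
rewrite e has_next_phase //.
rewrite (@eq_in_count _ _ (fun y => (b == hb) && ((y \notin sweep B) == ~~ hb))).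
  exact: count_next_errors_le SW SW' xsw (good_block_idle gB).
move=> y ysw /=; rewrite requested_next_phase ?size_phase_ids //.
- by rewrite (mem_block_pages y gB).
- exact: phase_ids_blocks_gt IC' gBs.
Qed.

Lemma phase_errors_blocks k b hb Bs x cur j : pages_but k cur x -> good_blocks k x Bs ->
  phase_errors (flatten (map (block_preds b) Bs))
    (phase_ids k cur j (flatten (map block_pages Bs))) (flatten (map block_pages Bs)) hb
  <= size Bs * errs_per_phase k hb b + (~~ nilp Bs) * errs_last_phase k hb b.
Proof.
elim: Bs x cur j => [|B Bs IH] x cur j IC /=; first by rewrite /phase_errors.
case/andP => gB gBs; have [_ sub SW _ _] := good_blockP gB.
have [cur' [e IC']] := phase_ids_block j (flatten (map block_pages Bs)) IC gB.
have aph := phase_ids_blocks_gt j.+1 IC' gBs.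
rewrite e phase_errors_cat ?size_block_preds ?size_phase_ids //.
apply: (errs_cons_le B _ (IH _ _ _ IC' gBs)).
rewrite /block_pages /block_preds phase_block_errors ?size_phase_ids //; last by case: SW.
exact: sweep_phase_errors_le SW IC' gBs.
Qed.

Lemma eta_phase_adversary k b hb Bs : good_blocks k k Bs ->
  eta_phase k (adv_requests k b Bs) hb <=
  (size Bs).+1 * errs_per_phase k hb b + errs_last_phase k hb b.
Proof.
move=> gBs; rewrite eta_phaseE unzip1_adv_requests unzip2_adv_requests.
set rs := flatten (map block_pages Bs).
have [c0 [e IC0]] := phase_ids_fill k rs.
have aph := phase_ids_blocks_gt 0 IC0 gBs.
rewrite e; have -> : nseq k 0 = nseq (size (iota 0 k)) 0 by rewrite size_iota.
rewrite phase_errors_cat ?size_nseq ?size_iota ?size_phase_ids //.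
apply: leq_trans (errs_cons_le (fill_block k) _ (phase_errors_blocks b hb 0 IC0 gBs)) _.
  have := @phase_block_errors [::] (iota 0 k) 0 _ rs b hb (fun _ => ltac:(done))
    (iota_uniq 0 k) aph (size_phase_ids _ _ _ _).
  rewrite /= !size_iota => ->.
  exact: sweep_phase_errors_le (pages_but_iota k) IC0 gBs.
by rewrite /= mul1n.
Qed.

Local Open Scope ring_scope.

(** * The lower bound *)

Lemma linear_gap_unbounded (R : realType) (H e K : R) : 0 < e ->
  ~ (forall n : nat, n%:R * H - 1 <= (H - e) * n%:R + K).
Proof.
move=> e0 Hn; set N := Num.bound `|(K + 1) / e|.
have : (K + 1) / e < N%:R := le_lt_trans (ler_norm _) (archi_boundP (normr_ge0 _)).
rewrite ltr_pdivrMr // => hN; have := Hn N; lra.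
Qed.

Section NotCompetitive.
Variables (R : realType) (k : nat) (A : alg R) (eta : seq (nat * bool) -> bool -> nat).
Hypotheses (vA : valid_alg k A) (k_gt0 : (0 < k)%N).
Hypothesis eta_adv : forall b hb Bs, good_blocks k k Bs ->
  (eta (adv_requests k b Bs) hb <= (size Bs).+1 * errs_per_phase k hb b
                                    + errs_last_phase k hb b)%N.

Lemma competitive_adversary_bound b beta gamma : competitive k eta A 2 beta gamma ->
  exists K : R, forall n : nat,
    n%:R * harmonic R k - 1 <= 2 * (k + n)%:R
      + beta * (n.+1 * errs_per_phase k false b)%:R
      + gamma * (n.+1 * errs_per_phase k true b + errs_last_phase k true b)%:R + K.
Proof.
case=> _ hb hc [K HK]; exists K => n.
have [Bs [gBs sz Hcost]] := exp_cost_adversary b n vA k_gt0.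
apply: le_trans Hcost (le_trans (HK _) _); rewrite lerD2r.
apply: lerD; [apply: lerD|]; apply: ler_wpM2l => //; rewrite ler_nat -sz.
- exact: opt_cost_adversary.
- by have := eta_adv b false gBs; rewrite addn0.
- exact: eta_adv.
Qed.

Lemma not_competitive_eta0 eps gamma : 0 < eps ->
  ~ competitive k eta A 2 (harmonic R k - 2 - eps) gamma.
Proof.
move=> e0 Hc; have [_ hb _ _] := Hc.
have [K HK] := competitive_adversary_bound false Hc.
apply: (@linear_gap_unbounded _ (harmonic R k) _ (2 * k%:R + (harmonic R k - 2 - eps) + K) e0).
move=> n; have := HK n.
change (errs_per_phase k false false) with 1%N; change (errs_per_phase k true false) with 0%N.
rewrite muln1 muln0 mulr0 addr0 -(natr1 n) (natrD _ k n); lra.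
Qed.

Lemma not_competitive_eta1 eps beta : 0 < eps ->
  ~ competitive k eta A 2 beta ((harmonic R k - 2) / (k%:R - 1) - eps).
Proof.
move=> e0 Hc; have [_ _ hc _] := Hc.
have [k1|k2] : k = 1%N \/ (1 < k)%N by lia.
  by move: hc; rewrite k1 subrr invr0 mulr0; lra.
have [K HK] := competitive_adversary_bound true Hc.
set d : R := k%:R - 1 in hc HK; have d0 : 0 < d by rewrite subr_gt0 ltr1n.
set g := (harmonic R k - 2) / d - eps in hc HK.
have gd : g * d = harmonic R k - 2 - eps * d by rewrite mulrBl divfK ?gt_eqF.
have dk : (k.-1)%:R = d by rewrite /d -[in RHS](prednK k_gt0) -natr1 addrK.
apply: (@linear_gap_unbounded _ (harmonic R k) _
  (2 * k%:R + (harmonic R k - 2 - eps * d) + g * k%:R + K) (mulr_gt0 e0 d0)) => n.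
have := HK n.
change (errs_per_phase k false true) with 0%N; change (errs_per_phase k true true) with k.-1.
change (errs_last_phase k true true) with k.
rewrite muln0 mulr0 addr0 (natrD _ (_ * _)) natrM dk -(natr1 n) (natrD _ k n).
have -> : g * ((n%:R + 1) * d + k%:R) = g * d * (n%:R + 1) + g * k%:R by ring.
rewrite gd; lra.
Qed.

End NotCompetitive.

Theorem corollary2 (R : realType) (k : nat) (hk : (1 <= k)%N)
    (eps : R) (heps : 0 < eps) (beta gamma : R) :
  (forall tb : seq nat -> nat, valid_tb tb ->
   forall A : alg R, valid_alg k A ->
     ~ competitive k (eta_discard k tb) A 2 (harmonic R k - 2 - eps) gamma /\
     ~ competitive k (eta_discard k tb) A 2 beta
         ((harmonic R k - 2) / (k%:R - 1) - eps)) /\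
  (forall A : alg R, valid_alg k A ->
     ~ competitive k (eta_phase k) A 2 (harmonic R k - 2 - eps) gamma /\
     ~ competitive k (eta_phase k) A 2 beta
         ((harmonic R k - 2) / (k%:R - 1) - eps)).
Proof.
split=> [tb vtb|] A vA.
- have eta_adv := fun b hb Bs => @eta_discard_adversary k tb b hb Bs vtb.
  by split; [exact: not_competitive_eta0 | exact: not_competitive_eta1].
- have eta_adv := @eta_phase_adversary k.
  by split; [exact: not_competitive_eta0 | exact: not_competitive_eta1].
Qed.
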